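(* The class of $\mathbb{R}$-forests (with isometric embeddings) has the joint embedding property and the amalgamation property.
   Context: An $\mathbb{R}$-forest is a complete extended ($[0,\infty]$-valued) metric space $(X,d)$ such that for every $x\in X$, $\{y:d(x,y)<\infty\}$ is an $\mathbb{R}$-tree (a uniquely arc-connected complete metric space whose arcs $[x,y]$ are isometric to $[0,d(x,y)]$). *)

From Stdlib Require Import Reals.
From Coquelicot Require Import Rbar.
Open Scope R_scope.

Definition is_ext_metric (X : Type) (d : X -> X -> Rbar) : Prop :=
  (forall x y, Rbar_le (Finite 0) (d x y)) /\
  (forall x y, d x y = Finite 0 <-> x = y) /\
  (forall x y, d x y = d y x) /\
  (forall x y z, Rbar_le (d x z) (Rbar_plus (d x y) (d y z))).

Definition cauchy_seq (X : Type) (d : X -> X -> Rbar) (u : nat -> X) : Prop :=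
  forall eps : R, 0 < eps -> exists N : nat, forall n m : nat,
    (N <= n)%nat -> (N <= m)%nat -> Rbar_lt (d (u n) (u m)) (Finite eps).

Definition seq_converges_to (X : Type) (d : X -> X -> Rbar) (u : nat -> X) (l : X) : Prop :=
  forall eps : R, 0 < eps -> exists N : nat, forall n : nat,
    (N <= n)%nat -> Rbar_lt (d (u n) l) (Finite eps).

Definition complete_on (X : Type) (d : X -> X -> Rbar) (S : X -> Prop) : Prop :=
  forall u : nat -> X, (forall n, S (u n)) -> cauchy_seq X d u ->
    exists l, S l /\ seq_converges_to X d u l.

Definition is_arc_path (X : Type) (d : X -> X -> Rbar) (S : X -> Prop)
    (y z : X) (gamma : R -> X) : Prop :=
  (forall t, 0 <= t <= 1 -> S (gamma t)) /\
  gamma 0 = y /\ gamma 1 = z /\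
  (forall s t, 0 <= s <= 1 -> 0 <= t <= 1 -> gamma s = gamma t -> s = t) /\
  (forall t, 0 <= t <= 1 -> forall eps, 0 < eps -> exists delta, 0 < delta /\
     forall s, 0 <= s <= 1 -> Rabs (s - t) < delta ->
       Rbar_lt (d (gamma s) (gamma t)) (Finite eps)).


(* The subset S, with the restriction of d (assumed finite on S),
   is an R-tree: complete, uniquely arc-connected, and every arc [y,z]
   is isometric to the real interval [0, d(y,z)]. *)
Definition is_Rtree_on (X : Type) (d : X -> X -> Rbar) (S : X -> Prop) : Prop :=
  complete_on X d S /\
  (forall y z, S y -> S z -> y <> z ->
     (exists gamma, is_arc_path X d S y z gamma) /\
     (forall g1 g2, is_arc_path X d S y z g1 -> is_arc_path X d S y z g2 ->
        forall p, (exists t, 0 <= t <= 1 /\ g1 t = p) <->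
                  (exists t, 0 <= t <= 1 /\ g2 t = p)) /\
     (forall gamma, is_arc_path X d S y z gamma ->
        exists (D : R) (phi : R -> X),
          d y z = Finite D /\
          (forall s t, 0 <= s <= D -> 0 <= t <= D ->
             d (phi s) (phi t) = Finite (Rabs (s - t))) /\
          (forall p, (exists t, 0 <= t <= 1 /\ gamma t = p) <->
                     (exists s, 0 <= s <= D /\ phi s = p)))).

Definition is_Rforest (X : Type) (d : X -> X -> Rbar) : Prop :=
  is_ext_metric X d /\
  complete_on X d (fun _ => True) /\
  (forall x : X, is_Rtree_on X d (fun y => Rbar_lt (d x y) p_infty)).

Definition isometric_embedding (X Y : Type) (dX : X -> X -> Rbar)
    (dY : Y -> Y -> Rbar) (f : X -> Y) : Prop :=
  forall a b, dY (f a) (f b) = dX a b.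

(** A complete extended metric space is an R-forest iff each component [{y | d(x,y) < oo}]
    is geodesic and satisfies the four-point condition, i.e. its Gromov products satisfy
    [(a|b)_y >= min((a|c)_y, (c|b)_y)].  Given this, an arc from [y] to [z] is compared with a
    geodesic through the Gromov products [(gamma t|z)_y] along it; conversely, in an R-tree two
    geodesics issued from [y] towards [a] and [b] agree exactly up to time [(a|b)_y].

    To amalgamate [B] and [C] over [A]: every [b] at finite distance from [f(A)] has a foot [a]
    in [A], the nearest point of its component (found by completeness of [A] and the four-point
    condition in [B]), with [d(b, f a') = d(b, f a) + d(a, a')].  Glue [B] and the points of [C]
    outside [g(A)] by [d(b, c) = d(b, f a) + d(a, a') + d(a', c)], with [a], [a'] the feet of [b]
    and [c].  Each component of the result is geodesic (concatenate through a foot), satisfies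
    the four-point condition (inherited from [A], [B] and [C]) and is complete, since a Cauchy
    sequence that keeps switching sides has feet converging in [A].  Joint embedding is
    amalgamation over the empty R-forest. *)

From Stdlib Require Import Reals Lra Lia Classical ClassicalEpsilon ProofIrrelevance
  FunctionalExtensionality PropExtensionality.
From Coquelicot Require Import Rbar.
Open Scope R_scope.

Section ExtMetric.
Context {X : Type} (d : X -> X -> Rbar) (Hd : is_ext_metric X d).

Definition fin_dist x y := d x y <> p_infty.
Definition rdist x y : R := real (d x y).

Lemma d_neq_m_infty x y : d x y <> m_infty.
Proof. destruct Hd as [H0 _]. intro E. specialize (H0 x y). rewrite E in H0. exact H0. Qed.

Lemma d_Finite x y : fin_dist x y -> d x y = Finite (rdist x y).
Proof.
  unfold fin_dist, rdist. intro H. generalize (d_neq_m_infty x y).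
  destruct (d x y); simpl; congruence.
Qed.

Lemma d_eq_Finite x y r : d x y = Finite r -> fin_dist x y /\ rdist x y = r.
Proof. unfold fin_dist, rdist. intro E; rewrite E; simpl; split; congruence. Qed.

Lemma d_lt_p_infty x y : Rbar_lt (d x y) p_infty <-> fin_dist x y.
Proof.
  unfold fin_dist. generalize (d_neq_m_infty x y).
  destruct (d x y); simpl; split; intros; try congruence; tauto.
Qed.

Lemma d_lt_Finite x y e : fin_dist x y -> (Rbar_lt (d x y) (Finite e) <-> rdist x y < e).
Proof. intro H. rewrite (d_Finite _ _ H). simpl. tauto. Qed.

Lemma d_lt_Finite_inv x y e : Rbar_lt (d x y) (Finite e) -> fin_dist x y /\ rdist x y < e.
Proof.
  intro H. assert (F : fin_dist x y) by (intro E; rewrite E in H; exact H).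
  split; [exact F|]. apply d_lt_Finite; auto.
Qed.

Lemma rdist_ge0 x y : 0 <= rdist x y.
Proof. destruct Hd as [H0 _]. specialize (H0 x y). unfold rdist. destruct (d x y); simpl in *; lra. Qed.

Lemma d_refl x : d x x = Finite 0.
Proof. destruct Hd as [_ [H _]]. apply H; reflexivity. Qed.

Lemma fin_dist_refl x : fin_dist x x.
Proof. unfold fin_dist; rewrite d_refl; congruence. Qed.

Lemma rdist_refl x : rdist x x = 0.
Proof. unfold rdist; rewrite d_refl; reflexivity. Qed.

Lemma d_sym x y : d x y = d y x.
Proof. destruct Hd as [_ [_ [H _]]]. apply H. Qed.

Lemma fin_dist_sym x y : fin_dist x y -> fin_dist y x.
Proof. unfold fin_dist; rewrite d_sym; auto. Qed.

Lemma rdist_sym x y : rdist x y = rdist y x.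
Proof. unfold rdist; rewrite d_sym; auto. Qed.

Lemma fin_dist_trans x y z : fin_dist x y -> fin_dist y z -> fin_dist x z.
Proof.
  intros H1 H2. destruct Hd as [_ [_ [_ Ht]]]. specialize (Ht x y z).
  rewrite (d_Finite _ _ H1), (d_Finite _ _ H2) in Ht. simpl in Ht.
  intro E; rewrite E in Ht; exact Ht.
Qed.

Lemma rdist_triangle x y z : fin_dist x y -> fin_dist y z -> rdist x z <= rdist x y + rdist y z.
Proof.
  intros H1 H2. destruct Hd as [_ [_ [_ Ht]]]. specialize (Ht x y z).
  rewrite (d_Finite _ _ H1), (d_Finite _ _ H2), (d_Finite _ _ (fin_dist_trans _ _ _ H1 H2)) in Ht.
  exact Ht.
Qed.

Lemma rdist_eq0 x y : fin_dist x y -> rdist x y = 0 -> x = y.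
Proof. intros H E. destruct Hd as [_ [H0 _]]. apply H0. rewrite d_Finite, E by auto. reflexivity. Qed.

Lemma fin_dist_component x0 x y : fin_dist x0 x -> fin_dist x0 y -> fin_dist x y.
Proof. intros. apply (fin_dist_trans _ x0); auto. apply fin_dist_sym; auto. Qed.

Lemma component_eq x0 : (fun y => Rbar_lt (d x0 y) p_infty) = fin_dist x0.
Proof.
  apply functional_extensionality; intro y.
  apply propositional_extensionality, d_lt_p_infty.
Qed.

Definition gromov y a b := (rdist y a + rdist y b - rdist a b) / 2.

Lemma gromov_sym y a b : gromov y a b = gromov y b a.
Proof. unfold gromov. rewrite (rdist_sym a b). lra. Qed.

Lemma gromov_le y a b : fin_dist y a -> fin_dist y b -> gromov y a b <= rdist y a.
Proof.
  intros. unfold gromov.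
  assert (rdist y b <= rdist y a + rdist a b)
    by (apply rdist_triangle; auto; apply fin_dist_component with y; auto; apply fin_dist_refl).
  lra.
Qed.

Lemma gromov_ge0 y a b : fin_dist y a -> fin_dist y b -> 0 <= gromov y a b.
Proof.
  intros. unfold gromov.
  assert (rdist a b <= rdist a y + rdist y b) by (apply rdist_triangle; auto; apply fin_dist_sym; auto).
  rewrite (rdist_sym a y) in *. lra.
Qed.

Lemma gromov_lipschitz y a b w : fin_dist y a -> fin_dist y b -> fin_dist y w ->
  Rabs (gromov y a w - gromov y b w) <= rdist a b.
Proof.
  intros. unfold gromov.
  assert (F : forall p q, fin_dist y p -> fin_dist y q -> fin_dist p q)
    by (intros; apply fin_dist_component with y; auto).
  assert (rdist y a <= rdist y b + rdist b a) by (apply rdist_triangle; auto).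
  assert (rdist y b <= rdist y a + rdist a b) by (apply rdist_triangle; auto).
  assert (rdist a w <= rdist a b + rdist b w) by (apply rdist_triangle; auto).
  assert (rdist b w <= rdist b a + rdist a w) by (apply rdist_triangle; auto).
  rewrite (rdist_sym b a) in *. apply Rabs_le; lra.
Qed.

End ExtMetric.

Lemma is_ext_metric_intro {X} (d : X -> X -> Rbar) :
  (forall x y, Rbar_le (Finite 0) (d x y)) -> (forall x, d x x = Finite 0) ->
  (forall x y, d x y = Finite 0 -> x = y) -> (forall x y, d x y = d y x) ->
  (forall x y z, fin_dist d x y -> fin_dist d y z ->
     fin_dist d x z /\ rdist d x z <= rdist d x y + rdist d y z) ->
  is_ext_metric X d.
Proof.
  intros H0 Hr Hz Hs Ht.
  assert (Nm : forall u v, d u v <> m_infty)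
    by (intros u v E; specialize (H0 u v); rewrite E in H0; exact H0).
  split; [auto|split; [|split; [auto|]]].
  - intros x y; split; [apply Hz|intros ->; apply Hr].
  - intros x y z. unfold fin_dist, rdist in Ht.
    generalize (Ht x y z) (Nm x y) (Nm y z) (Nm x z).
    destruct (d x y), (d y z), (d x z); simpl; intuition congruence.
Qed.

Definition continuous_on (F : R -> R) (a b : R) := forall t, a <= t <= b -> forall eps, 0 < eps ->
  exists delta, 0 < delta /\ forall s, a <= s <= b -> Rabs (s - t) < delta -> Rabs (F s - F t) < eps.

Lemma continuous_on_sub F a b a' b' :
  continuous_on F a b -> a <= a' -> b' <= b -> continuous_on F a' b'.
Proof.
  intros Hc Ha Hb t Ht eps He. destruct (Hc t ltac:(lra) eps He) as [dl [Hdl Hd]].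
  exists dl; split; auto. intros; apply Hd; auto; lra.
Qed.

Lemma continuous_on_rev F a b : continuous_on F a b -> continuous_on (fun u => F (a + b - u)) a b.
Proof.
  intros Hc t Ht eps Heps. destruct (Hc (a + b - t) ltac:(lra) eps Heps) as [dl [Hdl Hd]].
  exists dl; split; auto. intros s Hs Hst. apply Hd; [lra|].
  replace (a + b - s - (a + b - t)) with (- (s - t)) by ring. rewrite Rabs_Ropp; auto.
Qed.

Lemma exists_near_right t b delta : t < b -> 0 < delta -> exists u, t < u <= b /\ Rabs (u - t) < delta.
Proof.
  intros Htb Hd. exists (Rmin b (t + delta / 2)).
  pose proof (Rmin_l b (t + delta / 2)). pose proof (Rmin_r b (t + delta / 2)).
  assert (t < Rmin b (t + delta / 2)) by (apply Rmin_case; lra).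
  split; [lra|]. apply Rabs_def1; lra.
Qed.

Lemma exists_near_left a t delta : a < t -> 0 < delta -> exists u, a <= u < t /\ Rabs (u - t) < delta.
Proof.
  intros Hat Hd. exists (Rmax a (t - delta / 2)).
  pose proof (Rmax_l a (t - delta / 2)). pose proof (Rmax_r a (t - delta / 2)).
  assert (Rmax a (t - delta / 2) < t) by (apply Rmax_case; lra).
  split; [lra|]. apply Rabs_def1; lra.
Qed.

Lemma sup_below E t u : is_lub E t -> u < t -> exists v, E v /\ u < v.
Proof.
  intros [_ Hlub] Hu. apply NNPP. intro Hn.
  assert (Hub : is_upper_bound E u).
  { intros v Ev. apply Rnot_lt_le. intro. apply Hn. eauto. }
  specialize (Hlub _ Hub). lra.
Qed.

Lemma first_hitting_time F a b s : a <= b -> continuous_on F a b -> F a > s -> F b <= s ->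
  exists t, a < t <= b /\ F t = s /\ forall u, a <= u < t -> F u > s.
Proof.
  intros Hab Hc Ha Hb.
  set (E := fun u => a <= u <= b /\ forall v, a <= v <= u -> F v > s).
  assert (Ea : E a) by (split; [lra| intros v Hv; replace v with a by lra; auto]).
  assert (bE : bound E) by (exists b; intros u [[? ?] _]; auto).
  destruct (completeness E bE (ex_intro _ a Ea)) as [t Ht].
  assert (Hta : a <= t) by (apply Ht; auto).
  assert (Htb : t <= b) by (apply Ht; intros u [[? ?] _]; auto).
  assert (Hbelow : forall u, a <= u < t -> F u > s).
  { intros u Hu. destruct (sup_below E t u Ht ltac:(lra)) as [v [[_ Hv] Huv]]. apply Hv; lra. }
  assert (HFt : F t <= s).
  { apply Rnot_lt_le. intro Hgt.
    destruct (Req_dec t b) as [Etb|Ntb]; [subst t; lra|].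
    destruct (Hc t (conj Hta Htb) (F t - s)) as [dl [Hdl Hd]]; [lra|].
    destruct (exists_near_right t b dl ltac:(lra) Hdl) as [t' [Ht' Hdt']].
    assert (Et' : E t').
    { split; [lra|]. intros v Hv. destruct (Rlt_le_dec v t).
      - apply Hbelow; lra.
      - assert (Hv' : Rabs (F v - F t) < F t - s).
        { apply Hd; [lra|]. apply Rabs_def2 in Hdt'. apply Rabs_def1; lra. }
        apply Rabs_def2 in Hv'. lra. }
    apply (proj1 Ht) in Et'. lra. }
  assert (Hat : a < t) by (destruct (Req_dec a t); [subst; lra|lra]).
  exists t. split; [lra|]. split; [|auto].
  apply cond_eq. intros eps Heps.
  destruct (Hc t (conj Hta Htb) eps Heps) as [dl [Hdl Hd]].
  destruct (exists_near_left a t dl Hat Hdl) as [u [Hu Hdu]].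
  assert (Hfu : Rabs (F u - F t) < eps) by (apply Hd; [lra|exact Hdu]).
  specialize (Hbelow u Hu). apply Rabs_def2 in Hfu. apply Rabs_def1; lra.
Qed.

Lemma last_hitting_time F a b s : a <= b -> continuous_on F a b -> F a <= s -> F b > s ->
  exists t, a <= t < b /\ F t = s /\ forall u, t < u <= b -> F u > s.
Proof.
  intros Hab Hc Ha Hb.
  destruct (first_hitting_time (fun u => F (a + b - u)) a b s Hab (continuous_on_rev F a b Hc))
    as [t [Ht [Hft Hu]]].
  - replace (a + b - a) with b by ring; auto.
  - replace (a + b - b) with a by ring; auto.
  - exists (a + b - t). split; [lra|]. split; auto.
    intros u Hu'. replace u with (a + b - (a + b - u)) by ring. apply Hu; lra.
Qed.

Lemma inf_ge0_exists (V : R -> Prop) : (exists v, V v) -> (forall v, V v -> 0 <= v) ->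
  exists m, (forall v, V v -> m <= v) /\ (forall eps, 0 < eps -> exists v, V v /\ v < m + eps).
Proof.
  intros [v0 Hv0] Hpos.
  set (E := fun x => V (- x)).
  assert (bE : bound E) by (exists 0; intros x Ex; specialize (Hpos _ Ex); lra).
  assert (nE : E (- v0)) by (unfold E; rewrite Ropp_involutive; auto).
  destruct (completeness E bE (ex_intro _ _ nE)) as [M HM].
  exists (- M). split.
  - intros v Hv. assert (Ev : E (- v)) by (unfold E; rewrite Ropp_involutive; auto).
    apply (proj1 HM) in Ev. lra.
  - intros eps Heps. destruct (sup_below E M (M - eps) HM ltac:(lra)) as [x [Ex Hx]].
    exists (- x). split; auto. lra.
Qed.

Lemma eventual_choice {T} (P : nat -> T -> Prop) N :
  (forall n, (N <= n)%nat -> exists t, P n t) -> exists w : nat -> T, forall n, (N <= n)%nat -> P n (w n).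
Proof.
  intro H. destruct (H N (le_n N)) as [t0 _].
  destruct (choice (fun n t => (N <= n)%nat -> P n t)) as [w Hw]; eauto.
  intro n. destruct (Nat.le_gt_cases N n) as [Hn|Hn]; [destruct (H n Hn) as [t Ht]; eauto|].
  exists t0. lia.
Qed.

Lemma inv_INR_S_small eps : 0 < eps -> exists N, forall n, (N <= n)%nat -> / (INR n + 1) < eps.
Proof.
  intros He. destruct (archimed_cor1 eps He) as [N [HN HN0]]. exists N. intros n Hn.
  apply le_INR in Hn. apply lt_INR in HN0. simpl in HN0.
  eapply Rlt_trans; [|exact HN]. apply Rinv_lt_contravar; [apply Rmult_lt_0_compat; lra|lra].
Qed.

Lemma inv_INR_S_pos n : 0 < / (INR n + 1).
Proof. apply Rinv_0_lt_compat. pose proof (pos_INR n). lra. Qed.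

Definition isometric_path {X} (d : X -> X -> Rbar) (phi : R -> X) (L : R) :=
  forall s t, 0 <= s <= L -> 0 <= t <= L -> d (phi s) (phi t) = Finite (Rabs (s - t)).

Definition geodesic {X} (d : X -> X -> Rbar) (y z : X) (phi : R -> X) :=
  phi 0 = y /\ phi (rdist d y z) = z /\ isometric_path d phi (rdist d y z).

Definition geodesic_on {X} (d : X -> X -> Rbar) (S : X -> Prop) :=
  forall y z, S y -> S z -> exists phi, geodesic d y z phi.

Definition max_attained_twice (P Q R : R) :=
  (P <= Q \/ P <= R) /\ (Q <= P \/ Q <= R) /\ (R <= P \/ R <= Q).

Definition four_point_on {X} (d : X -> X -> Rbar) (S : X -> Prop) :=
  forall x y z w, S x -> S y -> S z -> S w ->
  max_attained_twice (rdist d x y + rdist d z w) (rdist d x z + rdist d y w)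
                     (rdist d x w + rdist d y z).

Lemma max_attained_twice_shift P Q R h :
  max_attained_twice P Q R -> max_attained_twice (P + h) (Q + h) (R + h).
Proof. unfold max_attained_twice. intros [[?|?] [[?|?] [?|?]]]; repeat split; lra. Qed.

Section Geodesics.
Context {X : Type} (d : X -> X -> Rbar) (Hd : is_ext_metric X d).

Lemma isometric_path_rdist phi L s t : isometric_path d phi L -> 0 <= s <= L -> 0 <= t <= L ->
  fin_dist d (phi s) (phi t) /\ rdist d (phi s) (phi t) = Rabs (s - t).
Proof. intros H Hs Ht. apply d_eq_Finite. auto. Qed.

Lemma isometric_path_ends psi L sa sb : isometric_path d psi L -> 0 <= sa <= L -> 0 <= sb <= L ->
  d (psi sa) (psi sb) = Finite L -> (sa = 0 /\ sb = L) \/ (sa = L /\ sb = 0).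
Proof.
  intros Hiso Ha Hb E. rewrite Hiso in E by auto. injection E; intro E'.
  destruct (Rle_dec 0 (sa - sb)); [rewrite Rabs_right in E' by lra|rewrite Rabs_left in E' by lra]; lra.
Qed.

Section OneGeodesic.
Context (y z : X) (phi : R -> X) (Hphi : geodesic d y z phi).

Lemma geodesic_rdist s t : 0 <= s <= rdist d y z -> 0 <= t <= rdist d y z ->
  fin_dist d (phi s) (phi t) /\ rdist d (phi s) (phi t) = Rabs (s - t).
Proof. apply isometric_path_rdist, Hphi. Qed.

Lemma geodesic_rdist_start s : 0 <= s <= rdist d y z -> fin_dist d y (phi s) /\ rdist d y (phi s) = s.
Proof.
  intro Hs. pose proof (rdist_ge0 d Hd y z).
  destruct (geodesic_rdist 0 s ltac:(lra) Hs) as [F E]. destruct Hphi as [H0 _].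
  rewrite H0 in F, E. rewrite E, Rabs_left1 by lra. split; auto; lra.
Qed.

Lemma geodesic_rdist_end s : 0 <= s <= rdist d y z ->
  fin_dist d (phi s) z /\ rdist d (phi s) z = rdist d y z - s.
Proof.
  intro Hs. destruct (geodesic_rdist s (rdist d y z) Hs ltac:(lra)) as [F E].
  destruct Hphi as [_ [HL _]]. rewrite HL in F, E. rewrite E, Rabs_left1 by lra. split; auto; lra.
Qed.

Lemma geodesic_restrict s : 0 <= s <= rdist d y z -> geodesic d y (phi s) phi.
Proof.
  intro Hs. destruct (geodesic_rdist_start s Hs) as [_ E]. destruct Hphi as [H0 [_ Hi]].
  unfold geodesic. rewrite E. split; [auto|split; auto]. intros u v Hu Hv. apply Hi; lra.
Qed.

End OneGeodesic.

Lemma geodesic_refl y : geodesic d y y (fun _ => y).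
Proof.
  split; [auto|split; [auto|]]. intros s t Hs Ht. rewrite (rdist_refl d Hd) in Hs, Ht.
  replace s with 0 by lra. replace t with 0 by lra. rewrite Rminus_0_r, Rabs_R0. apply (d_refl d Hd).
Qed.

Lemma geodesic_rev y z phi : geodesic d y z phi -> geodesic d z y (fun t => phi (rdist d y z - t)).
Proof.
  intros [H0 [HL Hi]]. unfold geodesic. rewrite (rdist_sym d Hd z y).
  split; [rewrite Rminus_0_r; auto|]. split; [rewrite Rminus_diag; auto|].
  intros s t Hs Ht. rewrite Hi by lra. f_equal.
  replace (rdist d y z - s - (rdist d y z - t)) with (- (s - t)) by ring. apply Rabs_Ropp.
Qed.

Lemma geodesic_concat x m y p1 p2 : fin_dist d x m -> fin_dist d m y ->
  rdist d x y = rdist d x m + rdist d m y ->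
  geodesic d x m p1 -> geodesic d m y p2 -> exists p, geodesic d x y p.
Proof.
  intros F1 F2 E G1 G2.
  set (L1 := rdist d x m) in *. set (L2 := rdist d m y) in *.
  assert (HL1 : 0 <= L1) by apply (rdist_ge0 d Hd). assert (HL2 : 0 <= L2) by apply (rdist_ge0 d Hd).
  exists (fun t => if Rle_dec t L1 then p1 t else p2 (t - L1)).
  assert (Mix : forall s t, 0 <= s <= L1 -> L1 < t <= L1 + L2 ->
            d (p1 s) (p2 (t - L1)) = Finite (Rabs (s - t))).
  { intros s t Hs Ht. assert (Ht' : 0 <= t - L1 <= L2) by lra.
    destruct (geodesic_rdist_end x m p1 G1 s Hs) as [G1e D1].
    destruct (geodesic_rdist_start x m p1 G1 s Hs) as [G1s D3].
    destruct (geodesic_rdist_start m y p2 G2 (t - L1) Ht') as [G2s D2].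
    destruct (geodesic_rdist_end m y p2 G2 (t - L1) Ht') as [G2e D4].
    fold L1 in D1. fold L2 in D4.
    assert (F : fin_dist d (p1 s) (p2 (t - L1))) by (apply (fin_dist_trans d Hd _ m); auto).
    rewrite (d_Finite d Hd _ _ F). f_equal.
    assert (Up : rdist d (p1 s) (p2 (t - L1)) <= rdist d (p1 s) m + rdist d m (p2 (t - L1)))
      by (apply (rdist_triangle d Hd); auto).
    assert (Lo : rdist d x y <= rdist d x (p1 s) + rdist d (p1 s) y)
      by (apply (rdist_triangle d Hd); auto; apply (fin_dist_trans d Hd _ m); auto).
    assert (Lo' : rdist d (p1 s) y <= rdist d (p1 s) (p2 (t - L1)) + rdist d (p2 (t - L1)) y)
      by (apply (rdist_triangle d Hd); auto).
    rewrite Rabs_left1 by lra. lra. }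
  destruct G1 as [A0 [AL Ai]]. destruct G2 as [B0 [BL Bi]]. fold L1 in AL, Ai. fold L2 in BL, Bi.
  split; [destruct (Rle_dec 0 L1); [auto|lra]|]. rewrite E. split.
  - destruct (Rle_dec (L1 + L2) L1).
    + assert (Z : L2 = 0) by lra. rewrite Z, Rplus_0_r, AL, <- BL, Z, B0. auto.
    + replace (L1 + L2 - L1) with L2 by ring. auto.
  - intros s t Hs Ht. destruct (Rle_dec s L1), (Rle_dec t L1).
    + apply Ai; lra.
    + apply Mix; lra.
    + rewrite (d_sym d Hd), Mix by lra. f_equal. apply Rabs_minus_sym.
    + rewrite Bi by lra. do 2 f_equal. ring.
Qed.

Lemma arc_of_lipschitz_injective x0 y z (c : R -> X) L : 0 < L -> c 0 = y -> c L = z ->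
  (forall s, 0 <= s <= L -> fin_dist d x0 (c s)) ->
  (forall s t, 0 <= s <= L -> 0 <= t <= L -> rdist d (c s) (c t) <= Rabs (s - t)) ->
  (forall s t, 0 <= s <= L -> 0 <= t <= L -> c s = c t -> s = t) ->
  is_arc_path X d (fin_dist d x0) y z (fun u => c (u * L)).
Proof.
  intros HL H0 HLz Hin Hlip Hinj.
  assert (Hm1 : forall u, 0 <= u <= 1 -> 0 <= u * L <= L) by (intros; split; nra).
  split; [|split; [|split; [|split]]].
  - intros t Ht. apply Hin, Hm1, Ht.
  - rewrite Rmult_0_l; auto.
  - rewrite Rmult_1_l; auto.
  - intros s t Hs Ht E. apply Hinj in E; auto. apply Rmult_eq_reg_r in E; lra.
  - intros t Ht eps He. exists (eps / L). split; [apply Rdiv_lt_0_compat; auto|].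
    intros s Hs Hst. apply (d_lt_Finite d Hd); [apply (fin_dist_component d Hd x0); auto|].
    eapply Rle_lt_trans; [apply Hlip; auto|].
    replace (s * L - t * L) with ((s - t) * L) by ring. rewrite Rabs_mult, (Rabs_right L) by lra.
    apply Rmult_lt_compat_r with (r := L) in Hst; auto.
    replace (eps / L * L) with eps in Hst by (field; lra). lra.
Qed.

Lemma geodesic_arc_path x0 y z phi : fin_dist d x0 y -> y <> z -> geodesic d y z phi ->
  is_arc_path X d (fin_dist d x0) y z (fun u => phi (u * rdist d y z)).
Proof.
  intros Sy Hyz G.
  assert (HL : 0 < rdist d y z).
  { destruct (Rle_lt_or_eq_dec _ _ (rdist_ge0 d Hd y z)) as [|E0]; auto.
    exfalso; apply Hyz. destruct G as [H0 [HLz _]]. rewrite <- HLz, <- E0. auto. }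
  pose proof G as [H0 [HLz Hiso]].
  apply arc_of_lipschitz_injective; auto.
  - intros s Hs. apply (fin_dist_trans d Hd _ y); auto. apply (geodesic_rdist_start y z phi G); auto.
  - intros s t Hs Ht. right. apply (isometric_path_rdist phi _ _ _ Hiso Hs Ht).
  - intros s t Hs Ht E. destruct (isometric_path_rdist phi _ _ _ Hiso Hs Ht) as [_ Est].
    rewrite E, (rdist_refl d Hd) in Est.
    apply NNPP; intro Hn. apply (Rabs_no_R0 (s - t)); [lra|]. auto.
Qed.

Lemma four_point_of_gromov_min (S : X -> Prop) :
  (forall y a b c, S y -> S a -> S b -> S c ->
     gromov d y a b >= gromov d y a c \/ gromov d y a b >= gromov d y c b) ->
  four_point_on d S.
Proof.
  intros H x y z w Sx Sy Sz Sw. unfold max_attained_twice.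
  pose proof (rdist_sym d Hd x y). pose proof (rdist_sym d Hd x z). pose proof (rdist_sym d Hd x w).
  pose proof (rdist_sym d Hd y z). pose proof (rdist_sym d Hd y w). pose proof (rdist_sym d Hd z w).
  split; [|split].
  - destruct (H z x y w) as [A|A]; auto; unfold gromov in A; first [left; lra | right; lra].
  - destruct (H y x z w) as [A|A]; auto; unfold gromov in A; first [left; lra | right; lra].
  - destruct (H z x w y) as [A|A]; auto; unfold gromov in A; first [left; lra | right; lra].
Qed.

End Geodesics.

(** * Geodesic components satisfying the four-point condition are R-trees *)

Section FourPointRtree.
Context {X : Type} (d : X -> X -> Rbar) (Hd : is_ext_metric X d) (x0 : X).
Local Notation S := (fin_dist d x0).
Local Notation finS := (fin_dist_component d Hd x0).
Hypothesis Hfp : four_point_on d S.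

Lemma gromov_min y a b c : S y -> S a -> S b -> S c ->
  gromov d y a b >= gromov d y a c \/ gromov d y a b >= gromov d y c b.
Proof.
  intros. destruct (Hfp a b y c) as [[Ha|Ha] _]; auto; unfold gromov;
  rewrite ?(rdist_sym d Hd y a), ?(rdist_sym d Hd b c), ?(rdist_sym d Hd b y) in *; [right|left]; lra.
Qed.

Lemma gromov_eq_of_gt y z q q' : S y -> S z -> S q -> S q' ->
  gromov d y q' q > gromov d y q z -> gromov d y q' z = gromov d y q z.
Proof.
  intros. destruct (gromov_min y q' z q) as [Ha|Ha]; auto;
  destruct (gromov_min y q z q') as [Hb|Hb]; auto; pose proof (gromov_sym d Hd y q q'); lra.
Qed.

Lemma gromov_locally_const y q q' w : S y -> S q -> S q' -> S w ->
  rdist d q q' < rdist d y q - gromov d y q w -> gromov d y q' w = gromov d y q w.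
Proof.
  intros Sy Sq Sq' Sw H.
  assert (rdist d y q <= rdist d y q' + rdist d q' q) by (apply (rdist_triangle d Hd); apply finS; auto).
  assert (Hg : gromov d y q' q > gromov d y q w).
  { unfold gromov in *. rewrite (rdist_sym d Hd q q') in *. lra. }
  destruct (gromov_min y q' w q) as [H1|H1]; auto;
  destruct (gromov_min y q w q') as [H2|H2]; auto; pose proof (gromov_sym d Hd y q q'); lra.
Qed.

Section OnGeodesic.
Context (y z : X) (Sy : S y) (Sz : S z) (phi : R -> X) (Hphi : geodesic d y z phi).
Local Notation D := (rdist d y z).

Lemma gromov_range q : S q -> 0 <= gromov d y q z <= D.
Proof.
  intros Sq. split; [apply (gromov_ge0 d Hd); apply finS; auto|].
  unfold gromov.
  assert (rdist d y q <= rdist d y z + rdist d z q) by (apply (rdist_triangle d Hd); apply finS; auto).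
  rewrite (rdist_sym d Hd z q) in *. lra.
Qed.

Lemma eq_geodesic_of_gromov q : S q -> rdist d y q = gromov d y q z -> q = phi (gromov d y q z).
Proof.
  intros Sq E. set (s := gromov d y q z).
  assert (Hs : 0 <= s <= D) by (apply gromov_range; auto).
  destruct (geodesic_rdist_start d Hd y z phi Hphi s Hs) as [F1 E1].
  destruct (geodesic_rdist_end d y z phi Hphi s Hs) as [_ E2].
  assert (Sp : S (phi s)) by (apply (fin_dist_trans d Hd _ y); auto).
  assert (Hz : gromov d y z (phi s) = s) by (unfold gromov; rewrite E1, (rdist_sym d Hd z (phi s)), E2; lra).
  apply (rdist_eq0 d Hd); [apply finS; auto|].
  pose proof (rdist_ge0 d Hd q (phi s)).
  destruct (gromov_min y q (phi s) z) as [Ha|Ha]; auto;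
  [|rewrite Hz in Ha]; unfold gromov at 1 in Ha; rewrite E1, E in Ha; fold s in Ha; lra.
Qed.

Section OnArc.
Context (gamma : R -> X) (Harc : is_arc_path X d S y z gamma).

Lemma arc_in_component t : 0 <= t <= 1 -> S (gamma t).
Proof. destruct Harc as [H _]; auto. Qed.

Lemma arc_continuous t : 0 <= t <= 1 -> forall eps, 0 < eps -> exists delta, 0 < delta /\
  forall s, 0 <= s <= 1 -> Rabs (s - t) < delta -> rdist d (gamma s) (gamma t) < eps.
Proof.
  intros Ht eps He. destruct Harc as [_ [_ [_ [_ Hc]]]].
  destruct (Hc t Ht eps He) as [dl [Hdl Hd']]. exists dl; split; auto.
  intros s Hs Hst. apply (d_lt_Finite d Hd); [apply finS; apply arc_in_component; auto|]. auto.
Qed.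

Lemma gromov_arc_continuous w : S w -> continuous_on (fun u => gromov d y (gamma u) w) 0 1.
Proof.
  intros Sw t Ht eps He. destruct (arc_continuous t Ht eps He) as [dl [Hdl Hd']].
  exists dl; split; auto. intros s Hs Hst.
  eapply Rle_lt_trans; [apply (gromov_lipschitz d Hd); apply finS; auto; apply arc_in_component; auto|].
  auto.
Qed.

(** [(gamma u|w)_y] is locally constant at [t'] unless [d(y, gamma t') = (gamma t'|w)_y]. *)
Lemma rdist_eq_gromov_of_jumps w t' : S w -> 0 <= t' <= 1 ->
  (forall delta, 0 < delta -> exists u, 0 <= u <= 1 /\ Rabs (u - t') < delta /\
       gromov d y (gamma u) w > gromov d y (gamma t') w) ->
  rdist d y (gamma t') = gromov d y (gamma t') w.
Proof.
  intros Sw Ht H.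
  pose proof (gromov_le d Hd y (gamma t') w (finS _ _ Sy (arc_in_component _ Ht)) (finS _ _ Sy Sw)) as Hle.
  destruct (Rle_lt_or_eq_dec _ _ Hle) as [Hlt|]; auto. exfalso.
  destruct (arc_continuous t' Ht (rdist d y (gamma t') - gromov d y (gamma t') w)) as [dl [Hdl Hd']]; [lra|].
  destruct (H dl Hdl) as [u [Hu [Hut Hg]]].
  specialize (Hd' u Hu Hut).
  enough (gromov d y (gamma u) w = gromov d y (gamma t') w) by lra.
  apply gromov_locally_const; auto; try apply arc_in_component; auto. rewrite (rdist_sym d Hd); auto.
Qed.

Lemma arc_on_geodesic_of_jumps q t' : S q -> 0 <= t' <= 1 ->
  gromov d y (gamma t') q = gromov d y q z ->
  (forall delta, 0 < delta -> exists u, 0 <= u <= 1 /\ Rabs (u - t') < delta /\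
       gromov d y (gamma u) q > gromov d y q z) ->
  gamma t' = phi (gromov d y q z).
Proof.
  intros Sq Ht E H.
  assert (E1 : rdist d y (gamma t') = gromov d y q z).
  { rewrite <- E. apply (rdist_eq_gromov_of_jumps q); auto. intros dl Hdl.
    destruct (H dl Hdl) as [u [? [? ?]]]. exists u; repeat split; auto; lra. }
  assert (E2 : gromov d y (gamma t') z = gromov d y q z).
  { apply cond_eq. intros eps He. destruct (gromov_arc_continuous z Sz t' Ht eps He) as [dl [Hdl Hd']].
    destruct (H dl Hdl) as [u [Hu [Hut Hg]]].
    specialize (Hd' u Hu Hut). rewrite (gromov_eq_of_gt y z q (gamma u)) in Hd'; auto;
      try apply arc_in_component; auto.
    rewrite Rabs_minus_sym; auto. }
  rewrite <- E2. apply eq_geodesic_of_gromov; [apply arc_in_component; auto|]. congruence.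
Qed.

Lemma arc_in_geodesic t0 : 0 <= t0 <= 1 -> gamma t0 = phi (gromov d y (gamma t0) z).
Proof.
  intros Ht0. set (q := gamma t0). assert (Sq : S q) by (apply arc_in_component; auto).
  set (s := gromov d y q z).
  assert (Hle : s <= rdist d y q) by (apply (gromov_le d Hd); apply finS; auto).
  destruct (Rle_lt_or_eq_dec _ _ Hle) as [Hlt|E]; [|apply eq_geodesic_of_gromov; auto].
  exfalso.
  destruct Harc as [_ [G0 [G1 [Hinj _]]]].
  set (F := fun u => gromov d y (gamma u) q).
  assert (Fc : continuous_on F 0 1) by (apply gromov_arc_continuous; auto).
  assert (Ft0 : F t0 = rdist d y q) by (unfold F, gromov; fold q; rewrite (rdist_refl d Hd); lra).
  assert (F0 : F 0 = 0) by (unfold F, gromov; rewrite G0, (rdist_refl d Hd); lra).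
  assert (F1 : F 1 = s) by (unfold F, s; rewrite G1; apply (gromov_sym d Hd)).
  assert (Hs0 : 0 <= s) by (apply (gromov_ge0 d Hd); apply finS; auto).
  (* [F] leaves the level [s] at two distinct times, which [gamma] both maps to [phi s]. *)
  destruct (first_hitting_time F t0 1 s ltac:(lra) (continuous_on_sub F 0 1 t0 1 Fc ltac:(lra) ltac:(lra))
              ltac:(lra) ltac:(lra)) as [t1 [Ht1 [Ft1 Hab1]]].
  destruct (last_hitting_time F 0 t0 s ltac:(lra) (continuous_on_sub F 0 1 0 t0 Fc ltac:(lra) ltac:(lra))
              ltac:(lra) ltac:(lra)) as [t2 [Ht2 [Ft2 Hab2]]].
  assert (P1 : gamma t1 = phi s).
  { apply arc_on_geodesic_of_jumps; auto; [lra|]. intros dl Hdl.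
    destruct (exists_near_left t0 t1 dl ltac:(lra) Hdl) as [u [Hu Hdu]].
    exists u. split; [lra|]. split; [exact Hdu|]. apply Hab1; lra. }
  assert (P2 : gamma t2 = phi s).
  { apply arc_on_geodesic_of_jumps; auto; [lra|]. intros dl Hdl.
    destruct (exists_near_right t2 t0 dl ltac:(lra) Hdl) as [u [Hu Hdu]].
    exists u. split; [lra|]. split; [exact Hdu|]. apply Hab2; lra. }
  assert (t1 = t2) by (apply Hinj; [lra|lra|congruence]). lra.
Qed.

Lemma geodesic_in_arc s : 0 <= s <= D -> exists t, 0 <= t <= 1 /\ gamma t = phi s.
Proof.
  intros Hs. destruct Harc as [_ [G0 [G1 _]]].
  destruct (Req_dec s D) as [E|Hn].
  { exists 1; split; [lra|]. rewrite G1, E. symmetry; apply Hphi. }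
  set (F := fun u => gromov d y (gamma u) z).
  assert (Fc : continuous_on F 0 1) by (apply gromov_arc_continuous; auto).
  assert (F0 : F 0 = 0) by (unfold F, gromov; rewrite G0, (rdist_refl d Hd); lra).
  assert (F1 : F 1 = D) by (unfold F, gromov; rewrite G1, (rdist_refl d Hd); lra).
  destruct (last_hitting_time F 0 1 s ltac:(lra) Fc ltac:(lra) ltac:(lra)) as [t [Ht [Ft Hab]]].
  exists t. split; [lra|].
  assert (E1 : rdist d y (gamma t) = gromov d y (gamma t) z).
  { apply rdist_eq_gromov_of_jumps; auto; [lra|]. intros dl Hdl.
    destruct (exists_near_right t 1 dl ltac:(lra) Hdl) as [u [Hu Hdu]].
    exists u. split; [lra|]. split; [exact Hdu|]. fold (F t). rewrite Ft. apply Hab; lra. }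
  rewrite (eq_geodesic_of_gromov (gamma t)); [|apply arc_in_component; lra|auto].
  fold (F t). rewrite Ft; auto.
Qed.

Lemma arc_image_eq_geodesic_image p :
  (exists t, 0 <= t <= 1 /\ gamma t = p) <-> (exists s, 0 <= s <= D /\ phi s = p).
Proof.
  split.
  - intros [t [Ht E]]. exists (gromov d y (gamma t) z).
    split; [apply gromov_range; apply arc_in_component; auto|]. rewrite <- arc_in_geodesic; auto.
  - intros [s [Hs E]]. destruct (geodesic_in_arc s Hs) as [t [Ht E']]. exists t; split; congruence.
Qed.

End OnArc.
End OnGeodesic.
End FourPointRtree.

Lemma Rtree_of_geodesic_four_point {X} (d : X -> X -> Rbar) (Hd : is_ext_metric X d)
    (Hc : complete_on X d (fun _ => True)) x0 :
  geodesic_on d (fin_dist d x0) -> four_point_on d (fin_dist d x0) ->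
  is_Rtree_on X d (fun y => Rbar_lt (d x0 y) p_infty).
Proof.
  intros Hg Hf. rewrite (component_eq d Hd x0). split.
  - intros u Hu Hcau. destruct (Hc u (fun _ => I) Hcau) as [l [_ Hl]]. exists l. split; auto.
    destruct (Hl 1 Rlt_0_1) as [N HN]. specialize (HN N (le_n N)).
    apply (fin_dist_trans d Hd _ (u N)); auto. intro E; rewrite E in HN; exact HN.
  - intros y z Sy Sz Hyz. destruct (Hg y z Sy Sz) as [phi G].
    pose proof (arc_image_eq_geodesic_image d Hd x0 Hf y z Sy Sz phi G) as Img.
    split; [|split].
    + eexists; apply (geodesic_arc_path d Hd); eauto.
    + intros g1 g2 A1 A2 p. rewrite (Img g1 A1 p), (Img g2 A2 p). tauto.
    + intros gamma A. exists (rdist d y z), phi.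
      split; [apply (d_Finite d Hd), (fin_dist_component d Hd x0); auto|].
      split; [apply G|]. apply Img, A.
Qed.

(** * R-trees are geodesic and satisfy the four-point condition *)

Lemma geodesics_last_agreement {X} (d : X -> X -> Rbar) (Hd : is_ext_metric X d) y a b pa pb :
  geodesic d y a pa -> geodesic d y b pb ->
  exists m, 0 <= m <= rdist d y a /\ m <= rdist d y b /\ pa m = pb m /\
    forall tau, m < tau -> tau <= rdist d y a -> tau <= rdist d y b -> pa tau <> pb tau.
Proof.
  intros Ga Gb. set (La := rdist d y a) in *. set (Lb := rdist d y b) in *.
  set (E := fun s => 0 <= s <= Rmin La Lb /\ pa s = pb s).
  assert (HLa : 0 <= La) by apply (rdist_ge0 d Hd). assert (HLb : 0 <= Lb) by apply (rdist_ge0 d Hd).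
  assert (Hmin : Rmin La Lb <= La /\ Rmin La Lb <= Lb) by (split; [apply Rmin_l|apply Rmin_r]).
  assert (E0 : E 0)
    by (split; [split; [lra|apply Rmin_glb; lra]|]; destruct Ga as [-> _]; destruct Gb as [-> _]; auto).
  assert (bE : bound E) by (exists (Rmin La Lb); intros s [Hs _]; lra).
  destruct (completeness E bE (ex_intro _ 0 E0)) as [m Hm].
  assert (Hm0 : 0 <= m) by (apply Hm; auto).
  assert (HmM : m <= Rmin La Lb) by (apply Hm; intros s [Hs _]; lra).
  assert (Hma : 0 <= m <= La) by lra. assert (Hmb : 0 <= m <= Lb) by lra.
  exists m. split; [lra|]. split; [lra|]. split.
  - destruct (geodesic_rdist_start d Hd y a pa Ga m Hma) as [Fya _].
    destruct (geodesic_rdist_start d Hd y b pb Gb m Hmb) as [Fyb _].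
    apply (rdist_eq0 d Hd); [apply (fin_dist_component d Hd y); auto|].
    apply Rle_antisym; [|apply (rdist_ge0 d Hd)].
    apply Rle_plus_epsilon. intros eps He.
    destruct (sup_below E m (m - eps / 2) Hm ltac:(lra)) as [s [[Hs Es] Hse]].
    assert (s <= m) by (apply Hm; split; auto).
    assert (Hsa : 0 <= s <= La) by lra. assert (Hsb : 0 <= s <= Lb) by lra.
    destruct (geodesic_rdist d y a pa Ga m s Hma Hsa) as [F1 D1].
    destruct (geodesic_rdist d y b pb Gb s m Hsb Hmb) as [F2 D2].
    rewrite <- Es in F2, D2.
    eapply Rle_trans; [apply (rdist_triangle d Hd _ (pa s)); auto|]. rewrite D1, D2.
    rewrite Rabs_right, Rabs_left1 by lra. lra.
  - intros tau H1 H2 H3 Q. assert (Et : E tau) by (split; auto; split; [lra|apply Rmin_glb; lra]).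
    apply (proj1 Hm) in Et. lra.
Qed.

Lemma gromov_ge_of_agreement {X} (d : X -> X -> Rbar) (Hd : is_ext_metric X d) y a b pa pb t :
  geodesic d y a pa -> geodesic d y b pb ->
  0 <= t <= rdist d y a -> t <= rdist d y b -> pa t = pb t -> t <= gromov d y a b.
Proof.
  intros Ga Gb Hta Htb E.
  assert (Htb' : 0 <= t <= rdist d y b) by lra.
  destruct (geodesic_rdist_end d y a pa Ga t Hta) as [F1 D1].
  destruct (geodesic_rdist_end d y b pb Gb t Htb') as [F2 D2]. rewrite <- E in F2, D2.
  assert (T : rdist d a b <= rdist d a (pa t) + rdist d (pa t) b)
    by (apply (rdist_triangle d Hd); auto; apply (fin_dist_sym d Hd); auto).
  rewrite (rdist_sym d Hd a (pa t)), D1, D2 in T. unfold gromov. lra.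
Qed.

Section RtreeGeodesic.
Context {X : Type} (d : X -> X -> Rbar) (Hd : is_ext_metric X d) (x0 : X)
  (HT : is_Rtree_on X d (fin_dist d x0)).
Local Notation S := (fin_dist d x0).
Local Notation finS := (fin_dist_component d Hd x0).

Lemma Rtree_arc_geodesic y z gamma : S y -> S z -> y <> z -> is_arc_path X d S y z gamma ->
  exists psi, geodesic d y z psi /\ forall p,
    (exists t, 0 <= t <= 1 /\ gamma t = p) <-> (exists s, 0 <= s <= rdist d y z /\ psi s = p).
Proof.
  intros Sy Sz Hyz A. destruct HT as [_ HT']. destruct (HT' y z Sy Sz Hyz) as [_ [_ Hseg]].
  destruct (Hseg gamma A) as [D [psi [EyzD [Hiso Him]]]].
  destruct (proj1 (Him y)) as [sy [Hsy Ey]]. { exists 0. split; [lra|apply A]. }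
  destruct (proj1 (Him z)) as [sz [Hsz Ez]]. { exists 1. split; [lra|apply A]. }
  destruct (d_eq_Finite d _ _ _ EyzD) as [_ Dyz].
  assert (E' : d (psi sy) (psi sz) = Finite D) by (rewrite Ey, Ez; auto).
  destruct (isometric_path_ends d psi D sy sz Hiso Hsy Hsz E') as [[-> ->]|[-> ->]].
  - exists psi. unfold geodesic. rewrite Dyz. split; [split; [auto|split; auto]|]. apply Him.
  - exists (fun t => psi (D - t)). rewrite Dyz. split.
    + assert (G : geodesic d z y psi)
        by (unfold geodesic; rewrite (rdist_sym d Hd), Dyz; split; [auto|split; auto]).
      pose proof (geodesic_rev d Hd z y psi G) as Gr. rewrite (rdist_sym d Hd), Dyz in Gr. exact Gr.
    + intro p. rewrite Him. split; intros [s [Hs Es]]; exists (D - s); split; try lra;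
        rewrite <- Es; f_equal; ring.
Qed.

Lemma Rtree_geodesic : geodesic_on d S.
Proof.
  intros y z Sy Sz. destruct (classic (y = z)) as [<-|Hyz].
  - exists (fun _ => y). apply (geodesic_refl d Hd).
  - destruct HT as [_ HT']. destruct (HT' y z Sy Sz Hyz) as [[gamma A] _].
    destruct (Rtree_arc_geodesic y z gamma Sy Sz Hyz A) as [psi [G _]]. eauto.
Qed.

Lemma Rtree_arc_split y z gamma t : S y -> S z -> y <> z -> is_arc_path X d S y z gamma ->
  0 <= t <= 1 -> rdist d y (gamma t) + rdist d (gamma t) z = rdist d y z.
Proof.
  intros Sy Sz Hyz A Ht. destruct (Rtree_arc_geodesic y z gamma Sy Sz Hyz A) as [psi [G Img]].
  destruct (proj1 (Img (gamma t))) as [s [Hs <-]]; [eauto|].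
  rewrite (proj2 (geodesic_rdist_start d Hd y z psi G s Hs)), (proj2 (geodesic_rdist_end d y z psi G s Hs)).
  ring.
Qed.

Lemma geodesics_agree_before y a b pa pb t : S y -> geodesic d y a pa -> geodesic d y b pb ->
  0 <= t <= rdist d y a -> t <= rdist d y b -> pa t = pb t ->
  forall t', 0 <= t' <= t -> pa t' = pb t'.
Proof.
  intros Sy Ga Gb Hta Htb E t' Ht'.
  destruct (Req_dec t 0) as [Z|NZ].
  { replace t' with 0 by lra. destruct Ga as [-> _]; destruct Gb as [-> _]; auto. }
  assert (Htb' : 0 <= t <= rdist d y b) by lra.
  pose proof (geodesic_restrict d Hd y a pa Ga t Hta) as Ga'.
  pose proof (geodesic_restrict d Hd y b pb Gb t Htb') as Gb'. rewrite <- E in Gb'.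
  destruct (geodesic_rdist_start d Hd y a pa Ga t Hta) as [Fp Dp].
  assert (Sp : S (pa t)) by (apply (fin_dist_trans d Hd _ y); auto).
  assert (Hyp : y <> pa t) by (intro Q; rewrite <- Q, (rdist_refl d Hd) in Dp; lra).
  pose proof (geodesic_arc_path d Hd x0 y (pa t) pa Sy Hyp Ga') as A1.
  pose proof (geodesic_arc_path d Hd x0 y (pa t) pb Sy Hyp Gb') as A2.
  rewrite Dp in A1, A2.
  destruct HT as [_ HT']. destruct (HT' y (pa t) Sy Sp Hyp) as [_ [Huniq _]].
  destruct (proj1 (Huniq _ _ A1 A2 (pa t'))) as [u [Hu Eu]].
  { assert (Eu : t' / t * t = t') by (field; auto).
    exists (t' / t). rewrite Eu. split; [split; nra|auto]. }
  destruct (geodesic_rdist_start d Hd y b pb Gb (u * t) ltac:(split; nra)) as [_ D1].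
  destruct (geodesic_rdist_start d Hd y a pa Ga t' ltac:(lra)) as [_ D2].
  rewrite Eu in D1. rewrite D1 in D2. rewrite D2 in Eu. symmetry; exact Eu.
Qed.

Section Branch.
Context (y a b : X) (pa pb : R -> X) (m : R) (Sy : S y)
  (Ga : geodesic d y a pa) (Gb : geodesic d y b pb)
  (Hm0 : 0 <= m) (Hma : m <= rdist d y a) (Hmb : m <= rdist d y b) (Em : pa m = pb m)
  (Hsep : forall tau, m < tau -> tau <= rdist d y a -> tau <= rdist d y b -> pa tau <> pb tau).
Local Notation La := (rdist d y a).
Local Notation Lb := (rdist d y b).

Definition branch_path s := if Rle_dec s (La - m) then pa (La - s) else pb (s - (La - m) + m).

Lemma branch_path_cases s : 0 <= s <= La + Lb - 2 * m ->
  (branch_path s = pa (La - s) /\ s <= La - m /\ m <= La - s <= La) \/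
  (branch_path s = pb (s - (La - m) + m) /\ La - m < s /\ m < s - (La - m) + m <= Lb).
Proof. intro Hs. unfold branch_path. destruct (Rle_dec s (La - m)); [left|right]; (split; [reflexivity|lra]). Qed.

Lemma pa_in_component s : 0 <= s <= La -> S (pa s).
Proof. intro Hs. apply (fin_dist_trans d Hd _ y); auto. apply (geodesic_rdist_start d Hd y a pa Ga s Hs). Qed.

Lemma pb_in_component s : 0 <= s <= Lb -> S (pb s).
Proof. intro Hs. apply (fin_dist_trans d Hd _ y); auto. apply (geodesic_rdist_start d Hd y b pb Gb s Hs). Qed.

Lemma branch_path_in_component s : 0 <= s <= La + Lb - 2 * m -> S (branch_path s).
Proof.
  intro Hs. destruct (branch_path_cases s Hs) as [[-> C]|[-> C]];
  [apply pa_in_component|apply pb_in_component]; lra.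
Qed.

Lemma rdist_across_branch s t : m <= s <= La -> m <= t <= Lb -> rdist d (pa s) (pb t) <= (s - m) + (t - m).
Proof.
  intros Hs Ht.
  eapply Rle_trans; [apply (rdist_triangle d Hd _ (pa m)); apply finS;
    first [apply pa_in_component; lra | apply pb_in_component; lra]|].
  rewrite Em at 2.
  rewrite (proj2 (geodesic_rdist d y a pa Ga s m ltac:(lra) ltac:(lra))).
  rewrite (proj2 (geodesic_rdist d y b pb Gb m t ltac:(lra) ltac:(lra))).
  rewrite Rabs_right, Rabs_left1 by lra. lra.
Qed.

Lemma branch_path_lipschitz s t : 0 <= s <= La + Lb - 2 * m -> 0 <= t <= La + Lb - 2 * m ->
  rdist d (branch_path s) (branch_path t) <= Rabs (s - t).
Proof.
  intros Hs Ht.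
  destruct (branch_path_cases s Hs) as [[-> Cs]|[-> Cs]];
  destruct (branch_path_cases t Ht) as [[-> Ct]|[-> Ct]].
  - rewrite (proj2 (geodesic_rdist d y a pa Ga (La - s) (La - t) ltac:(lra) ltac:(lra))).
    replace (La - s - (La - t)) with (- (s - t)) by ring. rewrite Rabs_Ropp. lra.
  - eapply Rle_trans; [apply rdist_across_branch; lra|]. rewrite Rabs_left1; lra.
  - rewrite (rdist_sym d Hd). eapply Rle_trans; [apply rdist_across_branch; lra|].
    rewrite Rabs_right; lra.
  - rewrite (proj2 (geodesic_rdist d y b pb Gb (s - (La - m) + m) (t - (La - m) + m) ltac:(lra) ltac:(lra))).
    replace (s - (La - m) + m - (t - (La - m) + m)) with (s - t) by ring. lra.
Qed.

Lemma branch_path_injective s t : 0 <= s <= La + Lb - 2 * m -> 0 <= t <= La + Lb - 2 * m ->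
  branch_path s = branch_path t -> s = t.
Proof.
  intros Hs Ht E.
  assert (Ra : forall u, 0 <= u <= La -> rdist d y (pa u) = u)
    by (intros; apply (geodesic_rdist_start d Hd y a pa Ga); auto).
  assert (Rb : forall u, 0 <= u <= Lb -> rdist d y (pb u) = u)
    by (intros; apply (geodesic_rdist_start d Hd y b pb Gb); auto).
  destruct (branch_path_cases s Hs) as [[Es Cs]|[Es Cs]];
  destruct (branch_path_cases t Ht) as [[Et Ct]|[Et Ct]]; rewrite Es, Et in E.
  - assert (Eq : La - s = La - t) by (rewrite <- (Ra (La - s)), <- (Ra (La - t)), E; lra). lra.
  - exfalso. assert (Eq : La - s = t - (La - m) + m)
      by (rewrite <- (Ra (La - s)), <- (Rb (t - (La - m) + m)), E; lra).
    apply (Hsep (La - s)); try lra. rewrite E, Eq. reflexivity.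
  - exfalso. assert (Eq : La - t = s - (La - m) + m)
      by (rewrite <- (Ra (La - t)), <- (Rb (s - (La - m) + m)), E; lra).
    apply (Hsep (La - t)); try lra. rewrite <- E, Eq. reflexivity.
  - assert (Eq : s - (La - m) + m = t - (La - m) + m)
      by (rewrite <- (Rb (s - (La - m) + m)), <- (Rb (t - (La - m) + m)), E; lra). lra.
Qed.

Lemma rdist_branch : a <> b -> rdist d a b = La + Lb - 2 * m.
Proof.
  intros Hab. set (L := La + Lb - 2 * m).
  assert (G0 : branch_path 0 = a).
  { unfold branch_path. destruct (Rle_dec 0 (La - m)); [|lra]. rewrite Rminus_0_r. apply Ga. }
  assert (GL : branch_path L = b).
  { unfold branch_path, L. destruct (Rle_dec (La + Lb - 2 * m) (La - m)).
    - replace (La - (La + Lb - 2 * m)) with m by lra. rewrite Em.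
      replace m with Lb at 1 by lra. apply Gb.
    - replace (La + Lb - 2 * m - (La - m) + m) with Lb by ring. apply Gb. }
  assert (HL : 0 < L).
  { destruct (Rle_lt_or_eq_dec 0 L) as [|E]; [unfold L; lra|auto|].
    exfalso. apply Hab. rewrite <- G0, <- GL, <- E. reflexivity. }
  assert (Emid : (La - m) / L * L = La - m) by (field; lra).
  assert (Hmid : 0 <= (La - m) / L <= 1) by (split; unfold L in *; nra).
  pose proof (arc_of_lipschitz_injective d Hd x0 a b branch_path L HL G0 GL branch_path_in_component
                branch_path_lipschitz branch_path_injective) as A.
  assert (Sa : S a) by (rewrite <- (proj1 (proj2 Ga)); apply pa_in_component; lra).
  assert (Sb : S b) by (rewrite <- (proj1 (proj2 Gb)); apply pb_in_component; lra).
  pose proof (Rtree_arc_split a b _ _ Sa Sb Hab A Hmid) as Split.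
  cbv beta in Split. rewrite Emid in Split.
  unfold branch_path in Split. destruct (Rle_dec (La - m) (La - m)); [|lra].
  replace (La - (La - m)) with m in Split by ring. rewrite <- Split.
  destruct (geodesic_rdist d y a pa Ga La m ltac:(lra) ltac:(lra)) as [_ D1].
  destruct (geodesic_rdist d y b pb Gb m Lb ltac:(lra) ltac:(lra)) as [_ D2].
  destruct Ga as [_ [Ea _]]. destruct Gb as [_ [Eb _]].
  rewrite Ea, Rabs_right in D1 by lra. rewrite <- Em, Eb, Rabs_left1 in D2 by lra.
  unfold L. lra.
Qed.

End Branch.

Lemma geodesics_agree_upto_gromov y a b pa pb t : S y -> S a -> S b ->
  geodesic d y a pa -> geodesic d y b pb -> 0 <= t <= gromov d y a b -> pa t = pb t.
Proof.
  intros Sy Sa Sb Ga Gb Ht.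
  pose proof (gromov_le d Hd y a b (finS _ _ Sy Sa) (finS _ _ Sy Sb)) as Hga.
  pose proof (gromov_le d Hd y b a (finS _ _ Sy Sb) (finS _ _ Sy Sa)) as Hgb.
  rewrite (gromov_sym d Hd y b a) in Hgb.
  destruct (geodesics_last_agreement d Hd y a b pa pb Ga Gb) as [m [Hma [Hmb [Em Hsep]]]].
  enough (Hgm : gromov d y a b <= m)
    by (apply (geodesics_agree_before y a b pa pb m); auto; lra).
  destruct (classic (a = b)) as [<-|Hab].
  - destruct (Rle_lt_or_eq_dec _ _ (proj2 Hma)) as [Hlt|Heq]; [|lra].
    exfalso. apply (Hsep (rdist d y a)); auto; try lra.
    destruct Ga as [_ [-> _]]. destruct Gb as [_ [-> _]]. reflexivity.
  - unfold gromov. rewrite (rdist_branch y a b pa pb m Sy Ga Gb ltac:(lra) ltac:(lra) Hmb Em Hsep Hab).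
    lra.
Qed.

Lemma Rtree_four_point : four_point_on d S.
Proof.
  apply (four_point_of_gromov_min d Hd). intros y a b c Sy Sa Sb Sc.
  destruct (Rtree_geodesic y a Sy Sa) as [pa Ga].
  destruct (Rtree_geodesic y b Sy Sb) as [pb Gb].
  destruct (Rtree_geodesic y c Sy Sc) as [pc Gc].
  set (mu := Rmin (gromov d y a c) (gromov d y c b)).
  destruct (Rle_dec mu (gromov d y a b)) as [Hle|Hlt].
  { unfold mu in Hle. revert Hle. apply Rmin_case; intro; [left|right]; lra. }
  exfalso. apply Hlt.
  pose proof (gromov_ge0 d Hd y a c (finS _ _ Sy Sa) (finS _ _ Sy Sc)).
  pose proof (gromov_ge0 d Hd y c b (finS _ _ Sy Sc) (finS _ _ Sy Sb)).
  assert (M0 : 0 <= mu) by (unfold mu; apply Rmin_case; lra).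
  assert (M1 : mu <= gromov d y a c) by apply Rmin_l.
  assert (M2 : mu <= gromov d y c b) by apply Rmin_r.
  assert (E1 : pa mu = pc mu) by (apply (geodesics_agree_upto_gromov y a c); auto; lra).
  assert (E2 : pc mu = pb mu) by (apply (geodesics_agree_upto_gromov y c b); auto; lra).
  apply (gromov_ge_of_agreement d Hd y a b pa pb); auto.
  - pose proof (gromov_le d Hd y a c (finS _ _ Sy Sa) (finS _ _ Sy Sc)). lra.
  - pose proof (gromov_le d Hd y b c (finS _ _ Sy Sb) (finS _ _ Sy Sc)).
    rewrite (gromov_sym d Hd y b c) in *. lra.
  - congruence.
Qed.

End RtreeGeodesic.

Lemma Rforest_geodesic_four_point {X} (d : X -> X -> Rbar) : is_Rforest X d ->
  forall x0, geodesic_on d (fin_dist d x0) /\ four_point_on d (fin_dist d x0).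
Proof.
  intros [Hd [_ HT]] x0. specialize (HT x0). rewrite (component_eq d Hd x0) in HT.
  split; [apply (Rtree_geodesic d Hd x0 HT)|apply (Rtree_four_point d Hd x0 HT)].
Qed.

(** * Feet of points over an embedded R-forest *)

Section Isometry.
Context {A B : Type} (dA : A -> A -> Rbar) (dB : B -> B -> Rbar) (f : A -> B)
  (Hf : isometric_embedding A B dA dB f).

Lemma fin_dist_isometry a a' : fin_dist dB (f a) (f a') <-> fin_dist dA a a'.
Proof. unfold fin_dist. rewrite Hf. tauto. Qed.

Lemma rdist_isometry a a' : rdist dB (f a) (f a') = rdist dA a a'.
Proof. unfold rdist. rewrite Hf. auto. Qed.

Lemma geodesic_isometry a1 a2 psi : geodesic dA a1 a2 psi -> geodesic dB (f a1) (f a2) (fun s => f (psi s)).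
Proof.
  intros [H0 [HL Hi]]. unfold geodesic. rewrite rdist_isometry, H0, HL.
  split; [auto|split; [auto|]]. intros s t Hs Ht. rewrite Hf. auto.
Qed.

Lemma isometry_injective : is_ext_metric A dA -> forall a a', f a = f a' -> a = a'.
Proof. intros HdA a a' E. apply HdA. rewrite <- Hf, E, Hf. apply (d_refl dA HdA). Qed.

End Isometry.

Lemma geodesic_point_at_gromov {B} (dB : B -> B -> Rbar) (HdB : is_ext_metric B dB) b p q chi :
  four_point_on dB (fin_dist dB b) -> fin_dist dB b p -> fin_dist dB b q -> geodesic dB p q chi ->
  exists s, 0 <= s <= rdist dB p q /\ fin_dist dB b (chi s) /\ rdist dB b (chi s) = gromov dB b p q.
Proof.
  intros Hfp Fp Fq G.
  assert (Fpq : fin_dist dB p q) by (apply (fin_dist_component dB HdB b); auto).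
  set (s := gromov dB p b q).
  assert (Hs : 0 <= s <= rdist dB p q).
  { split; [apply (gromov_ge0 dB HdB); auto; apply fin_dist_sym; auto|].
    unfold s, gromov.
    assert (rdist dB p b <= rdist dB p q + rdist dB q b)
      by (apply (rdist_triangle dB HdB); auto; apply fin_dist_sym; auto).
    rewrite (rdist_sym dB HdB q b) in *. lra. }
  destruct (geodesic_rdist_start dB HdB p q chi G s Hs) as [Fm Dm].
  destruct (geodesic_rdist_end dB p q chi G s Hs) as [Fmq Dmq].
  assert (Fbm : fin_dist dB b (chi s)) by (apply (fin_dist_trans dB HdB _ p); auto).
  exists s. split; auto. split; auto.
  assert (Tr : rdist dB b p <= rdist dB b (chi s) + rdist dB (chi s) p)
    by (apply (rdist_triangle dB HdB); auto; apply fin_dist_sym; auto).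
  pose proof (rdist_sym dB HdB (chi s) p). pose proof (rdist_sym dB HdB p b).
  destruct (Hfp b (chi s) p q (fin_dist_refl dB HdB b) Fbm Fp Fq) as [[H1|H1] _];
    unfold gromov, s, gromov in *; lra.
Qed.

Section Feet.
Context {A : Type} (dA : A -> A -> Rbar) (HdA : is_ext_metric A dA)
  (HcA : complete_on A dA (fun _ => True)) (HgA : forall x0, geodesic_on dA (fin_dist dA x0))
  {B : Type} (dB : B -> B -> Rbar) (HdB : is_ext_metric B dB)
  (HfB : forall x0, four_point_on dB (fin_dist dB x0))
  (f : A -> B) (Hf : isometric_embedding A B dA dB f).

Definition is_foot b a := fin_dist dB b (f a) /\
  forall a', fin_dist dA a a' -> rdist dB b (f a') = rdist dB b (f a) + rdist dA a a'.

Lemma fin_dist_over b a a' : fin_dist dB b (f a) -> fin_dist dA a a' -> fin_dist dB b (f a').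
Proof. intros. apply (fin_dist_trans dB HdB _ (f a)); auto. apply (fin_dist_isometry dA dB f Hf); auto. Qed.

Lemma fin_dist_under b a a' : fin_dist dB b (f a) -> fin_dist dB b (f a') -> fin_dist dA a a'.
Proof. intros. apply (fin_dist_isometry dA dB f Hf), (fin_dist_component dB HdB b); auto. Qed.

Lemma rdist_over b a a' : fin_dist dB b (f a) -> fin_dist dA a a' ->
  rdist dB b (f a') <= rdist dB b (f a) + rdist dA a a'.
Proof.
  intros. rewrite <- (rdist_isometry dA dB f Hf).
  apply (rdist_triangle dB HdB); auto. apply (fin_dist_isometry dA dB f Hf); auto.
Qed.

Lemma foot_self a : is_foot (f a) a.
Proof.
  split; [apply (fin_dist_refl dB HdB)|]. intros a' _.
  rewrite !(rdist_isometry dA dB f Hf), (rdist_refl dA HdA). ring.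
Qed.

Lemma foot_unique b a1 a2 : is_foot b a1 -> is_foot b a2 -> a1 = a2.
Proof.
  intros [F1 P1] [F2 P2].
  assert (F12 : fin_dist dA a1 a2) by (apply (fin_dist_under b); auto).
  specialize (P1 a2 F12). specialize (P2 a1 (fin_dist_sym dA HdA _ _ F12)).
  rewrite (rdist_sym dA HdA a2 a1) in P2. pose proof (rdist_ge0 dA HdA a1 a2).
  apply (rdist_eq0 dA HdA); auto. lra.
Qed.

Lemma rdist_le_excess b a0 del : fin_dist dB b (f a0) ->
  (forall a, fin_dist dA a0 a -> del <= rdist dB b (f a)) ->
  forall a1 a2, fin_dist dA a0 a1 -> fin_dist dA a0 a2 ->
  rdist dA a1 a2 <= (rdist dB b (f a1) - del) + (rdist dB b (f a2) - del).
Proof.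
  intros F0 Hdel a1 a2 F1 F2.
  destruct (HgA a0 a1 a2 F1 F2) as [psi G].
  destruct (geodesic_point_at_gromov dB HdB b (f a1) (f a2) _ (HfB b)
              (fin_dist_over b a0 a1 F0 F1) (fin_dist_over b a0 a2 F0 F2)
              (geodesic_isometry dA dB f Hf a1 a2 psi G)) as [s [Hs [_ Ds]]].
  rewrite (rdist_isometry dA dB f Hf) in Hs.
  destruct (geodesic_rdist_start dA HdA a1 a2 psi G s Hs) as [Fps _].
  assert (Hle : del <= rdist dB b (f (psi s))) by (apply Hdel, (fin_dist_trans dA HdA _ a1); auto).
  rewrite Ds in Hle. unfold gromov in Hle. rewrite (rdist_isometry dA dB f Hf) in Hle. lra.
Qed.

Lemma rdist_inf_attained b a0 : fin_dist dB b (f a0) -> exists a del, fin_dist dA a0 a /\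
  rdist dB b (f a) = del /\ forall a', fin_dist dA a0 a' -> del <= rdist dB b (f a').
Proof.
  intros F0.
  destruct (inf_ge0_exists (fun v => exists a, fin_dist dA a0 a /\ v = rdist dB b (f a)))
    as [del [Hlb Happ]].
  { exists (rdist dB b (f a0)), a0. split; auto. apply (fin_dist_refl dA HdA). }
  { intros v [a [_ ->]]. apply (rdist_ge0 dB HdB). }
  assert (Hdel : forall a, fin_dist dA a0 a -> del <= rdist dB b (f a)) by (intros; apply Hlb; eauto).
  assert (Hex : forall n : nat, exists a, fin_dist dA a0 a /\ rdist dB b (f a) < del + / (INR n + 1)).
  { intro n. destruct (Happ _ (inv_INR_S_pos n)) as [v [[a [Fa ->]] Hv]]. eauto. }
  destruct (choice _ Hex) as [an Han].
  assert (Dan : forall n m, rdist dA (an n) (an m) < / (INR n + 1) + / (INR m + 1)).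
  { intros n m. pose proof (rdist_le_excess b a0 del F0 Hdel (an n) (an m) (proj1 (Han n)) (proj1 (Han m))).
    pose proof (proj2 (Han n)). pose proof (proj2 (Han m)). lra. }
  destruct (HcA an (fun _ => I)) as [a [_ Hconv]].
  { intros eps He. destruct (inv_INR_S_small (eps/2) ltac:(lra)) as [N HN]. exists N. intros n m Hn Hm.
    apply (d_lt_Finite dA HdA); [apply (fin_dist_component dA HdA a0); apply Han|].
    pose proof (HN n Hn). pose proof (HN m Hm). specialize (Dan n m). lra. }
  assert (Fconv : forall eps, 0 < eps -> exists N, forall n, (N <= n)%nat ->
                    fin_dist dA (an n) a /\ rdist dA (an n) a < eps).
  { intros eps He. destruct (Hconv eps He) as [N HN]. exists N. intros n Hn.
    apply (d_lt_Finite_inv dA HdA), HN, Hn. }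
  exists a, del.
  assert (Fa : fin_dist dA a0 a).
  { destruct (Fconv 1 Rlt_0_1) as [N HN]. apply (fin_dist_trans dA HdA _ (an N)); [apply Han|apply HN; auto]. }
  split; [exact Fa|split; [|exact Hdel]].
  apply Rle_antisym; [|apply Hdel; auto].
  apply Rle_plus_epsilon. intros eps He.
  destruct (Fconv (eps/2) ltac:(lra)) as [N1 HN1]. destruct (inv_INR_S_small (eps/2) ltac:(lra)) as [N2 HN2].
  destruct (HN1 (Nat.max N1 N2) (Nat.le_max_l _ _)) as [Fn Dn].
  specialize (HN2 (Nat.max N1 N2) (Nat.le_max_r _ _)). destruct (Han (Nat.max N1 N2)) as [Fn' Dn'].
  pose proof (rdist_over b (an (Nat.max N1 N2)) a (fin_dist_over b a0 _ F0 Fn') Fn). lra.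
Qed.

Lemma foot_exists b a0 : fin_dist dB b (f a0) -> exists a, fin_dist dA a0 a /\ is_foot b a.
Proof.
  intros F0. destruct (rdist_inf_attained b a0 F0) as [a [del [Fa [Ea Hdel]]]].
  exists a. split; auto. split; [apply (fin_dist_over b a0); auto|]. intros a' Fa'.
  assert (Fa0a' : fin_dist dA a0 a') by (apply (fin_dist_trans dA HdA _ a); auto).
  pose proof (rdist_le_excess b a0 del F0 Hdel a a' Fa Fa0a').
  pose proof (rdist_over b a a' (fin_dist_over b a0 a F0 Fa) Fa').
  pose proof (Hdel a' Fa0a'). lra.
Qed.

Lemma rdist_via_feet b1 b2 a1 a2 : is_foot b1 a1 -> is_foot b2 a2 -> fin_dist dB b1 b2 ->
  rdist dB b1 b2 <= rdist dB b1 (f a1) + rdist dB b2 (f a2) + rdist dA a1 a2 /\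
  (rdist dB b1 b2 = rdist dB b1 (f a1) + rdist dB b2 (f a2) + rdist dA a1 a2 \/ rdist dA a1 a2 = 0).
Proof.
  intros [F1 P1] [F2 P2] F12.
  assert (Fa : fin_dist dA a1 a2) by (apply (fin_dist_under b1); auto; apply (fin_dist_trans dB HdB _ b2); auto).
  assert (G12 : fin_dist dB b1 (f a2)) by (apply (fin_dist_over b1 a1); auto).
  pose proof (HfB b1 b1 b2 (f a1) (f a2) (fin_dist_refl dB HdB b1) F12 F1 G12) as H.
  rewrite (P1 a2 Fa), (P2 a1 (fin_dist_sym dA HdA _ _ Fa)), (rdist_isometry dA dB f Hf),
    (rdist_sym dA HdA a2 a1) in H.
  assert (T : rdist dB b1 b2 <= rdist dB b1 (f a2) + rdist dB (f a2) b2)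
    by (apply (rdist_triangle dB HdB); auto; apply (fin_dist_sym dB HdB); auto).
  rewrite (P1 a2 Fa), (rdist_sym dB HdB (f a2) b2) in T.
  pose proof (rdist_ge0 dA HdA a1 a2).
  destruct H as [_ [_ [H|H]]]; (split; [lra|]); [left|right]; lra.
Qed.

End Feet.

(** * The glued distance *)

Section Glue.
Context {A : Type} (dA : A -> A -> Rbar) (HdA : is_ext_metric A dA)
  (HcA : complete_on A dA (fun _ => True)) (HgA : forall x0, geodesic_on dA (fin_dist dA x0))
  {B : Type} (dB : B -> B -> Rbar) (HdB : is_ext_metric B dB)
  (HfB : forall x0, four_point_on dB (fin_dist dB x0))
  {C : Type} (dC : C -> C -> Rbar) (HdC : is_ext_metric C dC)
  (HfC : forall x0, four_point_on dC (fin_dist dC x0))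
  (HfA : forall x0, four_point_on dA (fin_dist dA x0))
  (f : A -> B) (Hf : isometric_embedding A B dA dB f)
  (g : A -> C) (Hg : isometric_embedding A C dA dC g).
Local Notation footB := (is_foot dA dB f).
Local Notation footC := (is_foot dA dC g).

Definition glue_feet b c (aa : A * A) := footB b (fst aa) /\ footC c (snd aa) /\ fin_dist dA (fst aa) (snd aa).

Definition glue_dist (b : B) (c : C) : Rbar :=
  match excluded_middle_informative (exists aa, glue_feet b c aa) with
  | left H => let aa := proj1_sig (constructive_indefinite_description _ H) in
      Finite (rdist dB b (f (fst aa)) + rdist dA (fst aa) (snd aa) + rdist dC c (g (snd aa)))
  | right _ => p_infty
  end.

Definition fin_glue b c := glue_dist b c <> p_infty.
Definition rglue b c := real (glue_dist b c).

Lemma glue_dist_feet b c a a' : footB b a -> footC c a' -> fin_dist dA a a' ->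
  glue_dist b c = Finite (rdist dB b (f a) + rdist dA a a' + rdist dC c (g a')).
Proof.
  intros Fb Fc Fa. unfold glue_dist. destruct (excluded_middle_informative _) as [H|H].
  - destruct (constructive_indefinite_description _ H) as [aa Haa]. simpl. destruct Haa as [Fb1 [Fc1 _]].
    rewrite (foot_unique dA HdA dB HdB f Hf b (fst aa) a), (foot_unique dA HdA dC HdC g Hg c (snd aa) a');
      auto.
  - exfalso. apply H. exists (a, a'). split; auto.
Qed.

Lemma glue_dist_no_feet b c : ~ (exists aa, glue_feet b c aa) -> glue_dist b c = p_infty.
Proof. intro H. unfold glue_dist. destruct (excluded_middle_informative _); tauto. Qed.

Lemma fin_glue_feet b c : fin_glue b c -> exists a a', footB b a /\ footC c a' /\ fin_dist dA a a' /\
  rglue b c = rdist dB b (f a) + rdist dA a a' + rdist dC c (g a').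
Proof.
  unfold fin_glue, rglue. intro Hfin.
  destruct (classic (exists aa, glue_feet b c aa)) as [[[a a'] [Fb [Fc Fa]]]|Hn];
    [|rewrite glue_dist_no_feet in Hfin; tauto].
  exists a, a'. split; [exact Fb|split; [exact Fc|split; [exact Fa|]]].
  rewrite (glue_dist_feet b c a a'); auto.
Qed.

Lemma glue_dist_ge0 b c : Rbar_le (Finite 0) (glue_dist b c).
Proof.
  unfold glue_dist. destruct (excluded_middle_informative _); simpl; auto.
  repeat apply Rplus_le_le_0_compat;
    first [apply (rdist_ge0 dB HdB) | apply (rdist_ge0 dA HdA) | apply (rdist_ge0 dC HdC)].
Qed.

Lemma glue_dist_through b c a : fin_dist dB b (f a) -> fin_dist dC c (g a) ->
  fin_glue b c /\ rglue b c <= rdist dB b (f a) + rdist dC c (g a).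
Proof.
  intros Fb Fc.
  destruct (foot_exists dA HdA HcA HgA dB HdB HfB f Hf b a Fb) as [a1 [F1 P1]].
  destruct (foot_exists dA HdA HcA HgA dC HdC HfC g Hg c a Fc) as [a2 [F2 P2]].
  assert (F12 : fin_dist dA a1 a2) by (apply (fin_dist_component dA HdA a); auto).
  unfold fin_glue, rglue. rewrite (glue_dist_feet b c a1 a2); auto. simpl. split; [congruence|].
  destruct P1 as [_ P1]. destruct P2 as [_ P2].
  rewrite (P1 a (fin_dist_sym dA HdA _ _ F1)), (P2 a (fin_dist_sym dA HdA _ _ F2)).
  assert (rdist dA a1 a2 <= rdist dA a1 a + rdist dA a a2)
    by (apply (rdist_triangle dA HdA); auto; apply (fin_dist_sym dA HdA); auto).
  rewrite (rdist_sym dA HdA a2 a). lra.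
Qed.

Lemma rglue_foot_C b c a' : footC c a' -> fin_dist dB b (f a') ->
  rglue b c = rdist dB b (f a') + rdist dC c (g a').
Proof.
  intros Fc Fb.
  destruct (foot_exists dA HdA HcA HgA dB HdB HfB f Hf b a' Fb) as [a [Fa [Fba Pa]]].
  unfold rglue. rewrite (glue_dist_feet b c a a' (conj Fba Pa) Fc (fin_dist_sym dA HdA _ _ Fa)). simpl.
  rewrite (Pa a' (fin_dist_sym dA HdA _ _ Fa)). ring.
Qed.

Lemma glue_dist_g b a : glue_dist b (g a) = dB b (f a).
Proof.
  pose proof (foot_self dA HdA dC HdC g Hg a) as Fga.
  destruct (classic (fin_dist dB b (f a))) as [F|F].
  - assert (E : rglue b (g a) = rdist dB b (f a))
      by (rewrite (rglue_foot_C b (g a) a Fga F), (rdist_refl dC HdC); ring).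
    rewrite (d_Finite dB HdB _ _ F), <- E. unfold rglue.
    destruct (glue_dist_through b (g a) a F (fin_dist_refl dC HdC _)) as [Hfin _].
    revert Hfin. unfold fin_glue. pose proof (glue_dist_ge0 b (g a)).
    destruct (glue_dist b (g a)); simpl in *; tauto.
  - replace (dB b (f a)) with p_infty by (symmetry; apply NNPP, F). apply glue_dist_no_feet.
    intros [[a1 a2] [[Fb _] [Fc Fa]]]. simpl in *.
    rewrite (foot_unique dA HdA dC HdC g Hg (g a) a2 a Fc Fga) in Fa.
    apply F, (fin_dist_over dA dB HdB f Hf b a1); auto.
Qed.

Lemma glue_dist_neq0 b c : (forall a, g a <> c) -> glue_dist b c <> Finite 0.
Proof.
  intros Hc E. assert (Hfin : fin_glue b c) by (unfold fin_glue; rewrite E; congruence).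
  destruct (fin_glue_feet b c Hfin) as [a [a' [_ [[Fc _] [_ Eg]]]]].
  unfold rglue in Eg. rewrite E in Eg. simpl in Eg.
  pose proof (rdist_ge0 dB HdB b (f a)). pose proof (rdist_ge0 dA HdA a a').
  pose proof (rdist_ge0 dC HdC c (g a')).
  apply (Hc a'). symmetry. apply (rdist_eq0 dC HdC); auto. lra.
Qed.

Lemma glue_triangle_B b b' c : fin_dist dB b b' -> fin_glue b' c ->
  fin_glue b c /\ rglue b c <= rdist dB b b' + rglue b' c.
Proof.
  intros F H. destruct (fin_glue_feet b' c H) as [a [a' [[Fb' Pb'] [[Fc _] [Fa E]]]]].
  assert (Fb'a' : fin_dist dB b' (f a')) by (apply (fin_dist_over dA dB HdB f Hf b' a); auto).
  assert (Fba' : fin_dist dB b (f a')) by (apply (fin_dist_trans dB HdB _ b'); auto).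
  destruct (glue_dist_through b c a' Fba' Fc) as [H1 H2]. split; auto.
  assert (rdist dB b (f a') <= rdist dB b b' + rdist dB b' (f a')) by (apply (rdist_triangle dB HdB); auto).
  rewrite (Pb' a' Fa) in *. lra.
Qed.

Lemma rdist_le_glue_B b b' c : fin_glue b c -> fin_glue b' c ->
  fin_dist dB b b' /\ rdist dB b b' <= rglue b c + rglue b' c.
Proof.
  intros H H'.
  destruct (fin_glue_feet b c H) as [a1 [a' [[Fb1 _] [Fc [F1 E]]]]].
  destruct (fin_glue_feet b' c H') as [a2 [a'' [[Fb2 _] [Fc' [F2 E']]]]].
  rewrite (foot_unique dA HdA dC HdC g Hg c a'' a') in F2, E' by auto.
  assert (F12 : fin_dist dA a1 a2)
    by (apply (fin_dist_trans dA HdA _ a'); auto; apply (fin_dist_sym dA HdA); auto).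
  assert (Fba2 : fin_dist dB b (f a2)) by (apply (fin_dist_over dA dB HdB f Hf b a1); auto).
  split; [apply (fin_dist_trans dB HdB _ (f a2)); auto; apply (fin_dist_sym dB HdB); auto|].
  assert (rdist dB b b' <= rdist dB b (f a2) + rdist dB (f a2) b')
    by (apply (rdist_triangle dB HdB); auto; apply (fin_dist_sym dB HdB); auto).
  pose proof (rdist_over dA dB HdB f Hf b a1 a2 Fb1 F12).
  assert (rdist dA a1 a2 <= rdist dA a1 a' + rdist dA a' a2)
    by (apply (rdist_triangle dA HdA); auto; apply (fin_dist_sym dA HdA); auto).
  rewrite (rdist_sym dB HdB (f a2) b'), (rdist_sym dA HdA a' a2) in *.
  pose proof (rdist_ge0 dC HdC c (g a')). lra.
Qed.

Lemma four_point_BBBC b1 b2 b3 c : fin_dist dB b1 b2 -> fin_dist dB b1 b3 ->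
  fin_glue b1 c -> fin_glue b2 c -> fin_glue b3 c ->
  max_attained_twice (rdist dB b1 b2 + rglue b3 c) (rdist dB b1 b3 + rglue b2 c)
                     (rglue b1 c + rdist dB b2 b3).
Proof.
  intros F12 F13 M1 M2 M3.
  destruct (fin_glue_feet b1 c M1) as [a [a' [_ [Fc [_ _]]]]].
  assert (Hb : forall b, fin_glue b c -> fin_dist dB b (f a') /\
                 rglue b c = rdist dB b (f a') + rdist dC c (g a')).
  { intros b Mb. destruct (fin_glue_feet b c Mb) as [ab [ab' [[Fb _] [Fc' [Fab _]]]]].
    rewrite (foot_unique dA HdA dC HdC g Hg c ab' a') in Fab by auto.
    assert (Fba' : fin_dist dB b (f a')) by (apply (fin_dist_over dA dB HdB f Hf b ab); auto).
    split; auto. apply rglue_foot_C; auto. }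
  destruct (Hb b1 M1) as [G1 ->]. destruct (Hb b2 M2) as [G2 ->]. destruct (Hb b3 M3) as [G3 ->].
  pose proof (HfB b1 b1 b2 b3 (f a') (fin_dist_refl dB HdB b1) F12 F13 G1) as H.
  apply (max_attained_twice_shift _ _ _ (rdist dC c (g a'))) in H.
  unfold max_attained_twice in *. destruct H as [[?|?] [[?|?] [?|?]]]; repeat split; lra.
Qed.

(* [X], [Y]: distances inside [B] and [C]; [p], [q]: heights over the feet; [u], [v], [w]: distances
   between the feet in [A]. *)
Lemma max_attained_twice_glue X Y p1 p2 q1 q2 u v w11 w12 w21 w22 :
  0 <= u -> 0 <= v ->
  X <= p1 + p2 + u -> (X = p1 + p2 + u \/ u = 0) ->
  Y <= q1 + q2 + v -> (Y = q1 + q2 + v \/ v = 0) ->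
  w11 <= u + w21 -> w21 <= u + w11 -> w12 <= u + w22 -> w22 <= u + w12 ->
  w11 <= w12 + v -> w12 <= w11 + v -> w21 <= w22 + v -> w22 <= w21 + v ->
  max_attained_twice (u + v) (w11 + w22) (w12 + w21) ->
  max_attained_twice (X + Y) (p1 + w11 + q1 + (p2 + w22 + q2)) (p1 + w12 + q2 + (p2 + w21 + q1)).
Proof.
  unfold max_attained_twice. intros Hu Hv HX HXe HY HYe T1 T2 T3 T4 T5 T6 T7 T8 HA.
  destruct HXe, HYe; destruct HA as [[?|?] [[?|?] [?|?]]]; repeat split; first [left; lra | right; lra].
Qed.

Lemma four_point_BBCC b1 b2 c1 c2 : fin_dist dB b1 b2 -> fin_dist dC c1 c2 ->
  fin_glue b1 c1 -> fin_glue b1 c2 -> fin_glue b2 c1 -> fin_glue b2 c2 ->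
  max_attained_twice (rdist dB b1 b2 + rdist dC c1 c2) (rglue b1 c1 + rglue b2 c2)
                     (rglue b1 c2 + rglue b2 c1).
Proof.
  intros Fb Fc M11 M12 M21 M22.
  destruct (fin_glue_feet b1 c1 M11) as [a1 [a1' [P1 [P1' [F11 E11]]]]].
  destruct (fin_glue_feet b2 c2 M22) as [a2 [a2' [P2 [P2' [F22 E22]]]]].
  assert (Hfoot : forall b c a a', footB b a -> footC c a' -> fin_glue b c ->
             fin_dist dA a a' /\ rglue b c = rdist dB b (f a) + rdist dA a a' + rdist dC c (g a')).
  { intros b c a a' Pa Pa' M. destruct (fin_glue_feet b c M) as [x [x' [Px [Px' [Fx Ex]]]]].
    rewrite (foot_unique dA HdA dB HdB f Hf b a x), (foot_unique dA HdA dC HdC g Hg c a' x'); auto. }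
  destruct (Hfoot b1 c2 a1 a2' P1 P2' M12) as [F12 E12].
  destruct (Hfoot b2 c1 a2 a1' P2 P1' M21) as [F21 E21].
  rewrite E11, E12, E21, E22.
  assert (Fa : fin_dist dA a1 a2)
    by (apply (fin_dist_trans dA HdA _ a2'); auto; apply (fin_dist_sym dA HdA); auto).
  assert (Fa' : fin_dist dA a1' a2')
    by (apply (fin_dist_trans dA HdA _ a1); [apply (fin_dist_sym dA HdA)|]; auto).
  destruct (rdist_via_feet dA HdA dB HdB HfB f Hf b1 b2 a1 a2 P1 P2 Fb) as [LB1 LB2].
  destruct (rdist_via_feet dA HdA dC HdC HfC g Hg c1 c2 a1' a2' P1' P2' Fc) as [LC1 LC2].
  assert (T : forall x y z, fin_dist dA x y -> fin_dist dA y z -> rdist dA x z <= rdist dA x y + rdist dA y z)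
    by (intros; apply (rdist_triangle dA HdA); auto).
  pose proof (fin_dist_sym dA HdA) as Fsym.
  apply (max_attained_twice_glue _ _ _ _ _ _ (rdist dA a1 a2) (rdist dA a1' a2'));
    try apply (rdist_ge0 dA HdA); try assumption.
  - apply (T a1 a2 a1'); auto.
  - rewrite (rdist_sym dA HdA a1 a2). apply (T a2 a1 a1'); auto.
  - apply (T a1 a2 a2'); auto.
  - rewrite (rdist_sym dA HdA a1 a2). apply (T a2 a1 a2'); auto.
  - rewrite (rdist_sym dA HdA a1' a2'). apply (T a1 a2' a1'); auto.
  - apply (T a1 a1' a2'); auto.
  - rewrite (rdist_sym dA HdA a1' a2'). apply (T a2 a2' a1'); auto.
  - apply (T a2 a1' a2'); auto.
  - apply (HfA a1 a1 a2 a1' a2' (fin_dist_refl dA HdA a1) Fa F11 F12).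
Qed.

End Glue.

(** * The amalgam *)

Lemma Cauchy_converges_of_eventually_image {X Y} (dX : X -> X -> Rbar) (dY : Y -> Y -> Rbar)
    (e : Y -> X) (He : isometric_embedding Y X dY dX e) (HcY : complete_on Y dY (fun _ => True))
    (u : nat -> X) (v : nat -> Y) N :
  (forall n, (N <= n)%nat -> u n = e (v n)) -> cauchy_seq X dX u -> exists l, seq_converges_to X dX u l.
Proof.
  intros Eu Hcau. destruct (HcY v (fun _ => I)) as [l [_ Hl]].
  - intros eps He'. destruct (Hcau eps He') as [N1 HN1]. exists (Nat.max N N1). intros n m Hn Hm.
    rewrite <- He, <- Eu, <- Eu by lia. apply HN1; lia.
  - exists (e l). intros eps He'. destruct (Hl eps He') as [N2 HN2]. exists (Nat.max N N2).
    intros n Hn. rewrite Eu, He by lia. apply HN2. lia.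
Qed.

Section Amalgam.
Context {A : Type} (dA : A -> A -> Rbar) (HdA : is_ext_metric A dA)
  (HcA : complete_on A dA (fun _ => True)) (HgA : forall x0, geodesic_on dA (fin_dist dA x0))
  (HfA : forall x0, four_point_on dA (fin_dist dA x0))
  {B : Type} (dB : B -> B -> Rbar) (HdB : is_ext_metric B dB)
  (HcB : complete_on B dB (fun _ => True)) (HgB : forall x0, geodesic_on dB (fin_dist dB x0))
  (HfB : forall x0, four_point_on dB (fin_dist dB x0))
  {C : Type} (dC : C -> C -> Rbar) (HdC : is_ext_metric C dC)
  (HcC : complete_on C dC (fun _ => True)) (HgC : forall x0, geodesic_on dC (fin_dist dC x0))
  (HfC : forall x0, four_point_on dC (fin_dist dC x0))
  (f : A -> B) (Hf : isometric_embedding A B dA dB f)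
  (g : A -> C) (Hg : isometric_embedding A C dA dC g).
Local Notation glue := (glue_dist dA dB dC f g).
Local Notation finG := (fin_glue dA dB dC f g).
Local Notation rG := (rglue dA dB dC f g).

Lemma glue_sym b c : glue b c = glue_dist dA dC dB g f c b.
Proof.
  destruct (classic (exists aa, glue_feet dA dB dC f g b c aa)) as [[[a a'] [Fb [Fc Fa]]]|Hn].
  - simpl in *. rewrite (glue_dist_feet dA HdA dB HdB dC HdC f Hf g Hg b c a a'),
      (glue_dist_feet dA HdA dC HdC dB HdB g Hg f Hf c b a' a); auto; [|apply (fin_dist_sym dA HdA); auto].
    rewrite (rdist_sym dA HdA a' a). f_equal. ring.
  - rewrite !glue_dist_no_feet; auto.
    intros [[a' a] [Fc [Fb Fa]]]. apply Hn. exists (a, a'). simpl in *.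
    split; [|split]; auto. apply (fin_dist_sym dA HdA); auto.
Qed.

Lemma glue_dist_f a c : glue (f a) c = dC (g a) c.
Proof.
  rewrite glue_sym, (d_sym dC HdC).
  exact (glue_dist_g dA HdA HcA HgA dC HdC HfC dB HdB HfB g Hg f Hf c a).
Qed.

Lemma glue_triangle_C b c c' : fin_dist dC c c' -> finG b c' -> finG b c /\ rG b c <= rdist dC c c' + rG b c'.
Proof.
  unfold fin_glue, rglue. rewrite !glue_sym.
  exact (glue_triangle_B dA HdA HcA HgA dC HdC HfC dB HdB HfB g Hg f Hf c c' b).
Qed.

Lemma rdist_le_glue_C b c c' : finG b c -> finG b c' -> fin_dist dC c c' /\ rdist dC c c' <= rG b c + rG b c'.
Proof.
  unfold fin_glue, rglue. rewrite !glue_sym.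
  exact (rdist_le_glue_B dA HdA dC HdC dB HdB g Hg f Hf c c' b).
Qed.

Lemma four_point_BCCC b c1 c2 c3 : fin_dist dC c1 c2 -> fin_dist dC c1 c3 ->
  finG b c1 -> finG b c2 -> finG b c3 ->
  max_attained_twice (rdist dC c1 c2 + rG b c3) (rdist dC c1 c3 + rG b c2) (rG b c1 + rdist dC c2 c3).
Proof.
  unfold fin_glue, rglue. rewrite !glue_sym.
  exact (four_point_BBBC dA HdA HcA HgA dC HdC HfC dB HdB g Hg f Hf c1 c2 c3 b).
Qed.

Definition C_new := {c : C | forall a, g a <> c}.
Definition amalgam := (B + C_new)%type.

Definition amalgam_dist (x y : amalgam) : Rbar :=
  match x, y with
  | inl b, inl b' => dB b b'
  | inr c, inr c' => dC (proj1_sig c) (proj1_sig c')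
  | inl b, inr c | inr c, inl b => glue b (proj1_sig c)
  end.
Local Notation dD := amalgam_dist.

Lemma amalgam_metric : is_ext_metric amalgam dD.
Proof.
  apply is_ext_metric_intro.
  - intros [b|c] [b'|c']; simpl; [apply HdB|apply (glue_dist_ge0 dA HdA dB HdB dC HdC)..|apply HdC].
  - intros [b|c]; simpl; [apply (d_refl dB HdB)|apply (d_refl dC HdC)].
  - intros [b|[c pc]] [b'|[c' pc']]; simpl; intro E.
    + f_equal. apply HdB; auto.
    + exfalso. apply (glue_dist_neq0 dA HdA dB HdB dC HdC f Hf g Hg b c' pc'); auto.
    + exfalso. apply (glue_dist_neq0 dA HdA dB HdB dC HdC f Hf g Hg b' c pc); auto.
    + assert (c = c') by (apply HdC; auto). subst c'. rewrite (proof_irrelevance _ pc pc'). reflexivity.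
  - intros [b|c] [b'|c']; simpl; auto; [apply (d_sym dB HdB)|apply (d_sym dC HdC)].
  - intros [b|[c pc]] [b'|[c' pc']] [b''|[c'' pc'']]; unfold fin_dist, rdist; simpl; intros F1 F2.
    + split; [apply (fin_dist_trans dB HdB _ b')|apply (rdist_triangle dB HdB)]; auto.
    + exact (glue_triangle_B dA HdA HcA HgA dB HdB HfB dC HdC HfC f Hf g Hg b b' c'' F1 F2).
    + exact (rdist_le_glue_B dA HdA dB HdB dC HdC f Hf g Hg b b'' c' F1 F2).
    + destruct (glue_triangle_C b c'' c' (fin_dist_sym dC HdC _ _ F2) F1) as [F3 T]. split; auto.
      unfold rglue in T. rewrite (rdist_sym dC HdC c'' c') in T. unfold rdist in T. lra.
    + destruct (glue_triangle_B dA HdA HcA HgA dB HdB HfB dC HdC HfC f Hf g Hg b'' b' c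
                  (fin_dist_sym dB HdB _ _ F2) F1) as [F3 T]. split; auto.
      unfold rglue in T. rewrite (rdist_sym dB HdB b'' b') in T. unfold rdist in T. lra.
    + exact (rdist_le_glue_C b' c c'' F1 F2).
    + exact (glue_triangle_C b'' c c' F1 F2).
    + split; [apply (fin_dist_trans dC HdC _ c')|apply (rdist_triangle dC HdC)]; auto.
Qed.

Definition embed_C (c : C) : amalgam :=
  match excluded_middle_informative (exists a, g a = c) with
  | left H => inl (f (proj1_sig (constructive_indefinite_description _ H)))
  | right H => inr (exist _ c (fun a E => H (ex_intro _ a E)))
  end.

Lemma embed_C_cases c : (exists a, c = g a /\ embed_C c = inl (f a)) \/
                        (exists pc, embed_C c = inr (exist _ c pc)).
Proof.
  unfold embed_C. destruct (excluded_middle_informative _) as [H|H].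
  - left. destruct (constructive_indefinite_description _ H) as [a Ea]. simpl. exists a. auto.
  - right. eexists. reflexivity.
Qed.

Lemma embed_C_image a : embed_C (g a) = inl (f a).
Proof.
  destruct (embed_C_cases (g a)) as [[a' [E ->]]|[pc ->]].
  - apply (isometry_injective dA dC g Hg HdA) in E. subst; auto.
  - exfalso. apply (pc a); auto.
Qed.

Lemma embed_C_new (c : C_new) : embed_C (proj1_sig c) = inr c.
Proof.
  destruct c as [c pc]. simpl. destruct (embed_C_cases c) as [[a' [E ->]]|[pc' ->]].
  - exfalso. apply (pc a'); auto.
  - rewrite (proof_irrelevance _ pc pc'). auto.
Qed.

Lemma inl_isometric : isometric_embedding B amalgam dB dD inl.
Proof. intros b b'. reflexivity. Qed.

Lemma embed_C_isometric : isometric_embedding C amalgam dC dD embed_C.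
Proof.
  intros c c'.
  destruct (embed_C_cases c) as [[a [-> ->]]|[pc ->]];
  destruct (embed_C_cases c') as [[a' [-> ->]]|[pc' ->]]; simpl.
  - rewrite Hf, Hg. auto.
  - apply glue_dist_f.
  - rewrite glue_dist_f. apply (d_sym dC HdC).
  - auto.
Qed.

Lemma amalgam_geodesic_BC b c : fin_dist dD (inl b) (inr c) -> exists p, geodesic dD (inl b) (inr c) p.
Proof.
  intro F. simpl in F. change (finG b (proj1_sig c)) in F.
  destruct (fin_glue_feet dA HdA dB HdB dC HdC f Hf g Hg b _ F) as [a [a' [Pb [Pc [Fa _]]]]].
  assert (Fba' : fin_dist dB b (f a')) by (apply (fin_dist_over dA dB HdB f Hf b a); [apply Pb|exact Fa]).
  destruct (HgB b b (f a') (fin_dist_refl dB HdB b) Fba') as [p1 G1].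
  assert (Fgc : fin_dist dC (g a') (proj1_sig c)) by (apply (fin_dist_sym dC HdC), Pc).
  destruct (HgC (g a') (g a') (proj1_sig c) (fin_dist_refl dC HdC _) Fgc) as [p2 G2].
  assert (Em : dD (inl (f a')) (inr c) = dC (g a') (proj1_sig c)) by (simpl; apply glue_dist_f).
  apply (geodesic_concat dD amalgam_metric (inl b) (inl (f a')) (inr c) (fun t => inl (p1 t))
           (fun t => embed_C (p2 t))).
  - exact Fba'.
  - unfold fin_dist. rewrite Em. exact Fgc.
  - unfold rdist at 3. rewrite Em.
    change (rG b (proj1_sig c) = rdist dB b (f a') + rdist dC (g a') (proj1_sig c)).
    rewrite (rglue_foot_C dA HdA HcA HgA dB HdB HfB dC HdC f Hf g Hg b _ a' Pc Fba').
    rewrite (rdist_sym dC HdC). reflexivity.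
  - exact (geodesic_isometry dB dD inl inl_isometric b (f a') p1 G1).
  - rewrite <- (embed_C_image a'), <- (embed_C_new c).
    exact (geodesic_isometry dC dD embed_C embed_C_isometric (g a') (proj1_sig c) p2 G2).
Qed.

Lemma amalgam_geodesic x0 : geodesic_on dD (fin_dist dD x0).
Proof.
  intros y z Sy Sz. assert (F : fin_dist dD y z) by (apply (fin_dist_component dD amalgam_metric x0); auto).
  destruct y as [b|c]; destruct z as [b'|c'].
  - destruct (HgB b b b' (fin_dist_refl dB HdB b) F) as [p G].
    exists (fun t => inl (p t)). exact (geodesic_isometry dB dD inl inl_isometric b b' p G).
  - apply amalgam_geodesic_BC, F.
  - destruct (amalgam_geodesic_BC b' c) as [p G]; [apply (fin_dist_sym dD amalgam_metric), F|].
    eexists. apply (geodesic_rev dD amalgam_metric), G.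
  - destruct (HgC _ _ _ (fin_dist_refl dC HdC (proj1_sig c)) F) as [p G].
    exists (fun t => embed_C (p t)). rewrite <- (embed_C_new c), <- (embed_C_new c').
    exact (geodesic_isometry dC dD embed_C embed_C_isometric _ _ p G).
Qed.

Local Ltac close_case H :=
  repeat match type of H with
  | ?P -> _ => let h := fresh in
      assert (h : P) by (match goal with hh : fin_dist _ _ _ |- _ => exact hh end);
      specialize (H h); clear h
  end;
  unfold rglue, rdist in *; simpl in *; unfold max_attained_twice in *;
  destruct H as [[?|?] [[?|?] [?|?]]]; repeat split; first [left; lra | right; lra].
Local Notation BBBC b1 b2 b3 c :=
  (four_point_BBBC dA HdA HcA HgA dB HdB HfB dC HdC f Hf g Hg b1 b2 b3 (proj1_sig c)).
Local Notation BBCC b1 b2 c1 c2 :=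
  (four_point_BBCC dA HdA dB HdB HfB dC HdC HfC HfA f Hf g Hg b1 b2 (proj1_sig c1) (proj1_sig c2)).
Local Notation BCCC b c1 c2 c3 := (four_point_BCCC b (proj1_sig c1) (proj1_sig c2) (proj1_sig c3)).

(* Each case is an instance of one of five patterns, up to permuting the four points. *)
Lemma amalgam_four_point x0 : four_point_on dD (fin_dist dD x0).
Proof.
  intros x y z w Sx Sy Sz Sw.
  assert (F : forall p q, fin_dist dD x0 p -> fin_dist dD x0 q -> fin_dist dD p q)
    by (intros; apply (fin_dist_component dD amalgam_metric x0); auto).
  pose proof (F x y Sx Sy). pose proof (F y x Sy Sx). pose proof (F x z Sx Sz). pose proof (F z x Sz Sx).
  pose proof (F x w Sx Sw). pose proof (F w x Sw Sx). pose proof (F y z Sy Sz). pose proof (F z y Sz Sy).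
  pose proof (F y w Sy Sw). pose proof (F w y Sw Sy). pose proof (F z w Sz Sw). pose proof (F w z Sw Sz).
  pose proof (rdist_sym dD amalgam_metric x y). pose proof (rdist_sym dD amalgam_metric x z).
  pose proof (rdist_sym dD amalgam_metric x w). pose proof (rdist_sym dD amalgam_metric y z).
  pose proof (rdist_sym dD amalgam_metric y w). pose proof (rdist_sym dD amalgam_metric z w).
  clear F Sx Sy Sz Sw.
  destruct x as [bx|cx]; destruct y as [b_y|cy]; destruct z as [bz|cz]; destruct w as [bw|cw].
  - pose proof (HfB bx bx b_y bz bw (fin_dist_refl dB HdB bx)) as HQ; close_case HQ.
  - pose proof (BBBC bx b_y bz cw) as HQ; close_case HQ.
  - pose proof (BBBC bx b_y bw cz) as HQ; close_case HQ.
  - pose proof (BBCC bx b_y cz cw) as HQ; close_case HQ.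
  - pose proof (BBBC bx bz bw cy) as HQ; close_case HQ.
  - pose proof (BBCC bx bz cy cw) as HQ; close_case HQ.
  - pose proof (BBCC bx bw cy cz) as HQ; close_case HQ.
  - pose proof (BCCC bx cy cz cw) as HQ; close_case HQ.
  - pose proof (BBBC b_y bz bw cx) as HQ; close_case HQ.
  - pose proof (BBCC b_y bz cx cw) as HQ; close_case HQ.
  - pose proof (BBCC b_y bw cx cz) as HQ; close_case HQ.
  - pose proof (BCCC b_y cx cz cw) as HQ; close_case HQ.
  - pose proof (BBCC bz bw cx cy) as HQ; close_case HQ.
  - pose proof (BCCC bz cx cy cw) as HQ; close_case HQ.
  - pose proof (BCCC bw cx cy cz) as HQ; close_case HQ.
  - pose proof (HfC _ _ (proj1_sig cy) (proj1_sig cz) (proj1_sig cw) (fin_dist_refl dC HdC (proj1_sig cx))) as HQ;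
      close_case HQ.
Qed.

Definition foot_of (x : amalgam) a :=
  match x with inl b => is_foot dA dB f b a | inr c => is_foot dA dC g (proj1_sig c) a end.
Definition height (x : amalgam) a :=
  match x with inl b => rdist dB b (f a) | inr c => rdist dC (proj1_sig c) (g a) end.
Definition opposite (x y : amalgam) :=
  match x, y with inl _, inr _ | inr _, inl _ => True | _, _ => False end.

Lemma height_ge0 x a : 0 <= height x a.
Proof. destruct x; simpl; apply rdist_ge0; auto. Qed.

Lemma rdist_opposite x y a a' : opposite x y -> fin_dist dD x y -> foot_of x a -> foot_of y a' ->
  fin_dist dA a a' /\ rdist dD x y = height x a + height y a' + rdist dA a a'.
Proof.
  assert (Key : forall b c a a', finG b c -> is_foot dA dB f b a -> is_foot dA dC g c a' ->
            fin_dist dA a a' /\ rG b c = rdist dB b (f a) + rdist dC c (g a') + rdist dA a a').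
  { intros b c a1 a2 H P1 P2.
    destruct (fin_glue_feet dA HdA dB HdB dC HdC f Hf g Hg b c H) as [z [z' [Pz [Pz' [Fz Ez]]]]].
    rewrite (foot_unique dA HdA dB HdB f Hf b z a1), (foot_unique dA HdA dC HdC g Hg c z' a2) in * by auto.
    split; auto. rewrite Ez. ring. }
  destruct x as [b|c]; destruct y as [b'|c']; simpl; try tauto; intros _ F P P'.
  - apply Key; auto.
  - destruct (Key b' (proj1_sig c) a' a) as [K1 K2]; auto. split; [apply (fin_dist_sym dA HdA); auto|].
    change (rG b' (proj1_sig c) = rdist dC (proj1_sig c) (g a) + rdist dB b' (f a') + rdist dA a a').
    rewrite K2, (rdist_sym dA HdA a' a). ring.
Qed.

Lemma foot_of_exists x y : opposite x y -> fin_dist dD x y -> exists a, foot_of x a.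
Proof.
  destruct x as [b|c]; destruct y as [b'|c']; simpl; try tauto; intros _ F.
  - destruct (fin_glue_feet dA HdA dB HdB dC HdC f Hf g Hg b _ F) as [a [_ [P _]]]. eauto.
  - destruct (fin_glue_feet dA HdA dB HdB dC HdC f Hf g Hg b' _ F) as [_ [a [_ [P _]]]]. eauto.
Qed.

Lemma rdist_to_base x a a' : foot_of x a -> fin_dist dA a a' ->
  fin_dist dD x (inl (f a')) /\ rdist dD x (inl (f a')) = height x a + rdist dA a a'.
Proof.
  destruct x as [b|c]; simpl; intros [F P] Fa.
  - split; [apply (fin_dist_over dA dB HdB f Hf b a); auto|]. apply P, Fa.
  - unfold fin_dist, rdist. simpl. rewrite glue_dist_f, (d_sym dC HdC).
    split; [apply (fin_dist_over dA dC HdC g Hg _ a); auto|]. apply P, Fa.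
Qed.

Lemma rdist_feet_le_opposite x y a a' : opposite x y -> fin_dist dD x y -> foot_of x a -> foot_of y a' ->
  fin_dist dA a a' /\ rdist dA a a' <= rdist dD x y /\ height x a <= rdist dD x y.
Proof.
  intros O F Pa Pa'. destruct (rdist_opposite x y a a' O F Pa Pa') as [Fa E].
  pose proof (height_ge0 x a). pose proof (height_ge0 y a'). pose proof (rdist_ge0 dA HdA a a').
  split; [auto|split; lra].
Qed.

Lemma amalgam_Cauchy_alternating (u : nat -> amalgam) : cauchy_seq amalgam dD u ->
  (forall n N, exists k, (N <= k)%nat /\ opposite (u n) (u k)) -> exists l, seq_converges_to amalgam dD u l.
Proof.
  intros Hcau Opp.
  assert (Cau : forall eps, 0 < eps -> exists N, forall n m, (N <= n)%nat -> (N <= m)%nat ->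
                  fin_dist dD (u n) (u m) /\ rdist dD (u n) (u m) < eps).
  { intros eps He. destruct (Hcau eps He) as [N HN]. exists N. intros.
    apply (d_lt_Finite_inv dD amalgam_metric). auto. }
  destruct (Cau 1 Rlt_0_1) as [N1 HN1].
  assert (Fex : forall n, (N1 <= n)%nat -> exists a, foot_of (u n) a).
  { intros n Hn. destruct (Opp n N1) as [k [Hk Ok]]. apply (foot_of_exists (u n) (u k)); auto. apply HN1; auto. }
  destruct (eventual_choice _ N1 Fex) as [w Hw].
  destruct (HcA w (fun _ => I)) as [astar [_ Hconv]].
  { intros eps He. destruct (Cau (eps/2) ltac:(lra)) as [N2 HN2]. exists (Nat.max N1 N2). intros n m Hn Hm.
    destruct (Opp n (Nat.max N1 N2)) as [k [Hk Ok]].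
    destruct (HN2 n k ltac:(lia) ltac:(lia)) as [Fnk Dnk].
    destruct (rdist_feet_le_opposite (u n) (u k) (w n) (w k) Ok Fnk (Hw n ltac:(lia)) (Hw k ltac:(lia)))
      as [A1 [A2 _]].
    destruct (classic (opposite (u m) (u k))) as [Omk|Omk].
    - destruct (HN2 m k ltac:(lia) ltac:(lia)) as [Fmk Dmk].
      destruct (rdist_feet_le_opposite (u m) (u k) (w m) (w k) Omk Fmk (Hw m ltac:(lia)) (Hw k ltac:(lia)))
        as [B1 [B2 _]].
      apply (d_lt_Finite dA HdA);
        [apply (fin_dist_trans dA HdA _ (w k)); auto; apply (fin_dist_sym dA HdA); auto|].
      assert (rdist dA (w n) (w m) <= rdist dA (w n) (w k) + rdist dA (w k) (w m))
        by (apply (rdist_triangle dA HdA); auto; apply (fin_dist_sym dA HdA); auto).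
      rewrite (rdist_sym dA HdA (w k) (w m)) in *. lra.
    - assert (Onm : opposite (u n) (u m)) by (revert Ok Omk; destruct (u n), (u m), (u k); simpl; tauto).
      destruct (HN2 n m ltac:(lia) ltac:(lia)) as [Fnm Dnm].
      destruct (rdist_feet_le_opposite (u n) (u m) (w n) (w m) Onm Fnm (Hw n ltac:(lia)) (Hw m ltac:(lia)))
        as [C1 [C2 _]].
      apply (d_lt_Finite dA HdA); auto. lra. }
  exists (inl (f astar)). intros eps He.
  destruct (Cau (eps/2) ltac:(lra)) as [N2 HN2]. destruct (Hconv (eps/2) ltac:(lra)) as [N3 HN3].
  exists (Nat.max N1 (Nat.max N2 N3)). intros n Hn.
  destruct (Opp n (Nat.max N1 (Nat.max N2 N3))) as [k [Hk Ok]].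
  destruct (HN2 n k ltac:(lia) ltac:(lia)) as [Fnk _].
  destruct (rdist_feet_le_opposite (u n) (u k) (w n) (w k) Ok Fnk (Hw n ltac:(lia)) (Hw k ltac:(lia)))
    as [_ [_ Hht]].
  destruct (d_lt_Finite_inv dA HdA _ _ _ (HN3 n ltac:(lia))) as [Fwa Dwa].
  destruct (rdist_to_base (u n) (w n) astar (Hw n ltac:(lia)) Fwa) as [F E].
  apply (d_lt_Finite dD amalgam_metric); auto. specialize (HN2 n k ltac:(lia) ltac:(lia)). lra.
Qed.

Lemma amalgam_complete : complete_on amalgam dD (fun _ => True).
Proof.
  intros u _ Hcau. enough (Hl : exists l, seq_converges_to amalgam dD u l) by firstorder.
  destruct (classic (exists N, forall n, (N <= n)%nat -> exists b, u n = inl b)) as [[N HN]|HnB].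
  { destruct (HN N (le_n N)) as [b0 _].
    apply (Cauchy_converges_of_eventually_image dD dB (@inl B C_new) inl_isometric HcB u
             (fun n => match u n with inl b => b | inr _ => b0 end) N); auto.
    intros n Hn. destruct (HN n Hn) as [b ->]. reflexivity. }
  destruct (classic (exists N, forall n, (N <= n)%nat -> exists c, u n = inr c)) as [[N HN]|HnC].
  { destruct (HN N (le_n N)) as [c0 _].
    apply (Cauchy_converges_of_eventually_image dD dC embed_C embed_C_isometric HcC u
             (fun n => match u n with inr c => proj1_sig c | inl _ => proj1_sig c0 end) N); auto.
    intros n Hn. destruct (HN n Hn) as [c ->]. symmetry. apply embed_C_new. }
  apply (amalgam_Cauchy_alternating u Hcau). intros n N. apply NNPP. intro Hn. destruct (u n) as [b|c] eqn:En.
  - apply HnB. exists N. intros k Hk. destruct (u k) as [b'|c'] eqn:Ek; eauto.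
    exfalso. apply Hn. exists k. rewrite Ek. split; [exact Hk|exact I].
  - apply HnC. exists N. intros k Hk. destruct (u k) as [b'|c'] eqn:Ek; eauto.
    exfalso. apply Hn. exists k. rewrite Ek. split; [exact Hk|exact I].
Qed.

Lemma amalgam_Rforest : is_Rforest amalgam dD.
Proof.
  split; [exact amalgam_metric|]. split; [exact amalgam_complete|]. intro x0.
  apply (Rtree_of_geodesic_four_point dD amalgam_metric amalgam_complete);
    [apply amalgam_geodesic|apply amalgam_four_point].
Qed.

End Amalgam.
Arguments amalgam {A} B {C} g.

Theorem Rforest_amalgamation (A : Type) (dA : A -> A -> Rbar) (B : Type) (dB : B -> B -> Rbar)
    (C : Type) (dC : C -> C -> Rbar) (f : A -> B) (g : A -> C) :
  is_Rforest A dA -> is_Rforest B dB -> is_Rforest C dC ->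
  isometric_embedding A B dA dB f -> isometric_embedding A C dA dC g ->
  exists (D : Type) (dD : D -> D -> Rbar) (h : B -> D) (k : C -> D),
    is_Rforest D dD /\ isometric_embedding B D dB dD h /\ isometric_embedding C D dC dD k /\
    (forall a, h (f a) = k (g a)).
Proof.
  intros RA RB RC Hf Hg.
  pose proof (Rforest_geodesic_four_point dA RA) as PA.
  pose proof (Rforest_geodesic_four_point dB RB) as PB.
  pose proof (Rforest_geodesic_four_point dC RC) as PC.
  destruct RA as [HdA [HcA _]]. destruct RB as [HdB [HcB _]]. destruct RC as [HdC [HcC _]].
  exists (amalgam B g), (amalgam_dist dA dB dC f g), inl, (embed_C f g).
  split; [|split; [|split]].
  - apply (amalgam_Rforest dA HdA HcA (fun x => proj1 (PA x)) (fun x => proj2 (PA x))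
             dB HdB HcB (fun x => proj1 (PB x)) (fun x => proj2 (PB x))
             dC HdC HcC (fun x => proj1 (PC x)) (fun x => proj2 (PC x)) f Hf g Hg).
  - apply inl_isometric.
  - apply (embed_C_isometric dA HdA HcA (fun x => proj1 (PA x)) dB HdB (fun x => proj2 (PB x))
             dC HdC (fun x => proj2 (PC x)) f Hf g Hg).
  - intro a. symmetry. apply (embed_C_image dA HdA dC f g Hg).
Qed.

Lemma Rforest_empty : is_Rforest Empty_set (fun _ _ => Finite 0).
Proof.
  split; [|split].
  - split; [intros []|split; [intros []|split; intros []]].
  - intros u. destruct (u 0%nat).
  - intros [].
Qed.

Theorem Rforest_joint_embedding (X : Type) (dX : X -> X -> Rbar) (Y : Type) (dY : Y -> Y -> Rbar) :
  is_Rforest X dX -> is_Rforest Y dY ->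
  exists (Z : Type) (dZ : Z -> Z -> Rbar) (f : X -> Z) (g : Y -> Z),
    is_Rforest Z dZ /\ isometric_embedding X Z dX dZ f /\ isometric_embedding Y Z dY dZ g.
Proof.
  intros RX RY.
  destruct (Rforest_amalgamation Empty_set (fun _ _ => Finite 0) X dX Y dY
              (fun e => match e with end) (fun e => match e with end) Rforest_empty RX RY
              (fun e => match e with end) (fun e => match e with end)) as [Z [dZ [h [k [RZ [Hh [Hk _]]]]]]].
  exists Z, dZ, h, k. auto.
Qed.

Theorem proposition2p7 :
  (* joint embedding property *)
  (forall (X : Type) (dX : X -> X -> Rbar) (Y : Type) (dY : Y -> Y -> Rbar),
     is_Rforest X dX -> is_Rforest Y dY ->
     exists (Z : Type) (dZ : Z -> Z -> Rbar) (f : X -> Z) (g : Y -> Z),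
       is_Rforest Z dZ /\
       isometric_embedding X Z dX dZ f /\ isometric_embedding Y Z dY dZ g) /\
  (* amalgamation property *)
  (forall (A : Type) (dA : A -> A -> Rbar) (B : Type) (dB : B -> B -> Rbar)
          (C : Type) (dC : C -> C -> Rbar) (f : A -> B) (g : A -> C),
     is_Rforest A dA -> is_Rforest B dB -> is_Rforest C dC ->
     isometric_embedding A B dA dB f -> isometric_embedding A C dA dC g ->
     exists (D : Type) (dD : D -> D -> Rbar) (h : B -> D) (k : C -> D),
       is_Rforest D dD /\
       isometric_embedding B D dB dD h /\ isometric_embedding C D dC dD k /\
       (forall a : A, h (f a) = k (g a))).
Proof.
  split; [exact Rforest_joint_embedding|exact Rforest_amalgamation].
Qed.
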